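(* Let $(X,d)$ be a $\delta$-Gromov hyperbolic space, $p\in X$, $\epsilon>0$, and $X^\epsilon=(X,d_\epsilon)$ the uniformized space with base point $p$. If the Gehring-Hayman property for metric boundary points holds for $X^\epsilon$, then the canonical boundary map $\Phi:\partial_GX\to\partial_{d_\epsilon}X^\epsilon$ is bijective.
   Context: Gromov product $(x|y)_p=\frac12(d(p,x)+d(p,y)-d(x,y))$. $\delta$-Gromov hyperbolic: unbounded, proper, geodesic, and $(x|z)_p\ge\min\{(x|y)_p,(y|z)_p\}-\delta$ for all $x,y,z,p$. Uniformized metric: $d_\epsilon(x,y)=\inf_\gamma\int_\gamma e^{-\epsilon d(p,z)}ds(z)$ over $d$-rectifiable curves; $l_{d_\epsilon}$ is $d_\epsilon$-length; $\partial_{d_\epsilon}X^\epsilon=\overline{X^\epsilon}\setminus X^\epsilon$ (closure in the completion); $[x,y]$ a $d$-geodesic. $\partial_GX$ is the set of geodesic rays from $p$ modulo $\gamma\sim\tilde\gamma$ iff $\sup_t d(\gamma(t),\tilde\gamma(t))<\infty$; $\Phi([\gamma])=\lim_{k\to\infty}\gamma(k)$ in $d_\epsilon$ (well defined). GH property for metric boundary points: for every $x\in\partial_{d_\epsilon}X^\epsilon$ and every $(x_n)\subseteq X$ with $d_\epsilon(x_n,x)\to0$ there is $C\ge1$ with $l_{d_\epsilon}([x_n,x_m])\le Cd_\epsilon(x_n,x_m)$ for all $n,m$. *)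

From Stdlib Require Import Reals List.
From Coquelicot Require Import Coquelicot.
Open Scope R_scope.

Definition is_metric {X : Type} (d : X -> X -> R) : Prop :=
  (forall x y, 0 <= d x y) /\ (forall x y, d x y = 0 <-> x = y) /\
  (forall x y, d x y = d y x) /\ (forall x y z, d x z <= d x y + d y z).

Definition open_set {X : Type} (d : X -> X -> R) (U : X -> Prop) : Prop :=
  forall x, U x -> exists r, 0 < r /\ forall y, d x y < r -> U y.

Definition compact_set {X : Type} (d : X -> X -> R) (K : X -> Prop) : Prop :=
  forall (I : Type) (U : I -> X -> Prop),
    (forall i, open_set d (U i)) -> (forall x, K x -> exists i, U i x) ->
    exists l : list I, forall x, K x -> exists i, In i l /\ U i x.

Definition proper_space {X : Type} (d : X -> X -> R) : Prop :=
  forall x r, compact_set d (fun y => d x y <= r).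

Definition unbounded_space {X : Type} (d : X -> X -> R) : Prop :=
  forall M, exists x y, M < d x y.

Definition geodesic_segment {X : Type} (d : X -> X -> R) (x y : X) (sigma : R -> X) : Prop :=
  sigma 0 = x /\ sigma (d x y) = y /\
  forall s t, 0 <= s <= d x y -> 0 <= t <= d x y -> d (sigma s) (sigma t) = Rabs (s - t).

Definition geodesic_space {X : Type} (d : X -> X -> R) : Prop :=
  forall x y, exists sigma, geodesic_segment d x y sigma.

Definition gromov_prod {X : Type} (d : X -> X -> R) (p x y : X) : R :=
  (d p x + d p y - d x y) / 2.

Definition gromov_hyperbolic {X : Type} (d : X -> X -> R) (delta : R) : Prop :=
  is_metric d /\ unbounded_space d /\ proper_space d /\ geodesic_space d /\
  forall x y z p,
    gromov_prod d p x z >= Rmin (gromov_prod d p x y) (gromov_prod d p y z) - delta.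

Definition partition (a b : R) (n : nat) (t : nat -> R) : Prop :=
  t O = a /\ t n = b /\ forall i, (i < n)%nat -> t i <= t (S i).

Fixpoint psum (f : R -> R -> R) (t : nat -> R) (n : nat) : R :=
  match n with
  | O => 0
  | S k => psum f t k + f (t k) (t (S k))
  end.

Definition curve_length {X : Type} (d : X -> X -> R) (gamma : R -> X) (a b : R) : Rbar :=
  Lub_Rbar (fun s => exists n t, partition a b n t /\
                       s = psum (fun u v => d (gamma u) (gamma v)) t n).

Definition continuous_on {X : Type} (d : X -> X -> R) (gamma : R -> X) (a b : R) : Prop :=
  forall t, a <= t <= b -> forall e, 0 < e -> exists eta, 0 < eta /\
    forall s, a <= s <= b -> Rabs (s - t) < eta -> d (gamma s) (gamma t) < e.

Definition rectifiable {X : Type} (d : X -> X -> R) (gamma : R -> X) (a b : R) : Prop :=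
  a <= b /\ continuous_on d gamma a b /\ is_finite (curve_length d gamma a b).

(** Line integral of a (continuous, nonnegative) density rho along a rectifiable
    curve w.r.t. arclength: supremum of lower Darboux sums
    sum_i (inf_{[t_i,t_{i+1}]} rho o gamma) * length(gamma|[t_i,t_{i+1}]). *)
Definition line_integral {X : Type} (d : X -> X -> R) (rho : X -> R)
  (gamma : R -> X) (a b : R) : R :=
  real (Lub_Rbar (fun s => exists n t, partition a b n t /\
     s = psum (fun u v =>
                 real (Glb_Rbar (fun r => exists w, u <= w <= v /\ r = rho (gamma w)))
                 * real (curve_length d gamma u v)) t n)).

Definition d_eps {X : Type} (d : X -> X -> R) (p : X) (eps : R) (x y : X) : R :=
  real (Glb_Rbar (fun I => exists gamma a b,
     rectifiable d gamma a b /\ gamma a = x /\ gamma b = y /\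
     I = line_integral d (fun z => exp (- eps * d p z)) gamma a b)).

Definition seq_cauchy {X : Type} (e : X -> X -> R) (xs : nat -> X) : Prop :=
  forall r, 0 < r -> exists N, forall n m, (N <= n)%nat -> (N <= m)%nat -> e (xs n) (xs m) < r.

Definition seq_converges_to {X : Type} (e : X -> X -> R) (xs : nat -> X) (x : X) : Prop :=
  forall r, 0 < r -> exists N, forall n, (N <= n)%nat -> e (xs n) x < r.

Definition seq_equiv {X : Type} (e : X -> X -> R) (xs ys : nat -> X) : Prop :=
  forall r, 0 < r -> exists N, forall n, (N <= n)%nat -> e (xs n) (ys n) < r.

(** A point of the metric boundary (completion minus X) is represented by a
    Cauchy sequence with no limit in X; two representatives define the same
    boundary point iff they are seq_equiv. *)
Definition boundary_seq {X : Type} (e : X -> X -> R) (xs : nat -> X) : Prop :=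
  seq_cauchy e xs /\ ~ (exists x, seq_converges_to e xs x).

Definition geodesic_ray {X : Type} (d : X -> X -> R) (p : X) (gamma : R -> X) : Prop :=
  gamma 0 = p /\ forall s t, 0 <= s -> 0 <= t -> d (gamma s) (gamma t) = Rabs (s - t).

Definition ray_equiv {X : Type} (d : X -> X -> R) (gamma gamma' : R -> X) : Prop :=
  exists C, forall t, 0 <= t -> d (gamma t) (gamma' t) <= C.

(** Phi([gamma]) = lim_k gamma(k) in d_eps: the boundary point represented by
    the sequence k |-> gamma(k). *)

Definition ray_seq {X : Type} (gamma : R -> X) : nat -> X := fun k => gamma (INR k).

Definition GH_property {X : Type} (d : X -> X -> R) (p : X) (eps : R) : Prop :=
  forall ys, boundary_seq (d_eps d p eps) ys ->
  forall xs, seq_equiv (d_eps d p eps) xs ys ->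
  exists C, 1 <= C /\ forall n m sigma, geodesic_segment d (xs n) (xs m) sigma ->
    Rbar_le (curve_length (d_eps d p eps) sigma 0 (d (xs n) (xs m)))
            (C * d_eps d p eps (xs n) (xs m)).

Definition Phi_bijective {X : Type} (d : X -> X -> R) (p : X) (eps : R) : Prop :=
  let e := d_eps d p eps in
  (forall gamma, geodesic_ray d p gamma -> boundary_seq e (ray_seq gamma)) /\
  (forall gamma gamma', geodesic_ray d p gamma -> geodesic_ray d p gamma' ->
     ray_equiv d gamma gamma' -> seq_equiv e (ray_seq gamma) (ray_seq gamma')) /\
  (forall gamma gamma', geodesic_ray d p gamma -> geodesic_ray d p gamma' ->
     seq_equiv e (ray_seq gamma) (ray_seq gamma') -> ray_equiv d gamma gamma') /\
  (forall xs, boundary_seq e xs ->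
     exists gamma, geodesic_ray d p gamma /\ seq_equiv e (ray_seq gamma) xs).

(* The density exp (- eps d(p, .)) decays exponentially along a geodesic ray, so the points
   g(k) of a ray form a d_eps-Cauchy sequence, whereas crossing a unit shell at distance r
   from p costs at least exp (- eps (r + 1)), so this sequence has no limit in X; rays at
   bounded distance give d_eps-equivalent sequences.
   Injectivity: if g(k) and g'(k) are d_eps-asymptotic, the Gehring-Hayman property makes the
   d_eps-length of the geodesic [g(k), g'(k)] tend to 0. Since that geodesic passes within
   (g(k) | g'(k))_p + 2 delta of p, and approaching p is expensive, the Gromov products
   (g(k) | g'(k))_p are unbounded, and delta-hyperbolicity then gives d(g(t), g'(t)) <= 4 delta.
   Surjectivity: a boundary sequence x_n escapes to infinity (properness), the geodesics
   [p, x_n] subconverge by a diagonal argument over rational times to a ray g, and g(k) is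
   d_eps-close to x_n since the part of [p, x_n] beyond time k has d_eps-length at most
   exp (- eps k) / eps. *)

From Stdlib Require Import Reals Lra Lia List Classical ClassicalEpsilon Cantor.
From Coquelicot Require Import Coquelicot.
Open Scope R_scope.
Set Bullet Behavior "Strict Subproofs".

Lemma Lub_Rbar_ge (E : R -> Prop) x : E x -> Rbar_le x (Lub_Rbar E).
Proof. intros Ex. apply (proj1 (Lub_Rbar_correct E)), Ex. Qed.

Lemma Lub_Rbar_le (E : R -> Prop) B : (forall x, E x -> x <= B) -> Rbar_le (Lub_Rbar E) B.
Proof. intros HB. apply (proj2 (Lub_Rbar_correct E)). intros x Ex. apply HB, Ex. Qed.

Lemma Glb_Rbar_le (E : R -> Prop) x : E x -> Rbar_le (Glb_Rbar E) x.
Proof. intros Ex. apply (proj1 (Glb_Rbar_correct E)), Ex. Qed.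

Lemma Glb_Rbar_ge (E : R -> Prop) B : (forall x, E x -> B <= x) -> Rbar_le B (Glb_Rbar E).
Proof. intros HB. apply (proj2 (Glb_Rbar_correct E)). intros x Ex. apply HB, Ex. Qed.

Lemma Lub_Rbar_le_Lub_Rbar (E1 E2 : R -> Prop) :
  (forall x, E1 x -> exists y, E2 y /\ x <= y) -> Rbar_le (Lub_Rbar E1) (Lub_Rbar E2).
Proof.
  intros H. apply (proj2 (Lub_Rbar_correct E1)). intros x Ex.
  destruct (H x Ex) as [y [Ey Hxy]].
  apply Rbar_le_trans with (Finite y); [exact Hxy | apply Lub_Rbar_ge, Ey].
Qed.

Lemma real_Lub_Rbar_ge (E : R -> Prop) x B :
  E x -> (forall y, E y -> y <= B) -> x <= real (Lub_Rbar E).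
Proof.
  intros Ex HB. generalize (Lub_Rbar_ge E x Ex) (Lub_Rbar_le E B HB).
  destruct (Lub_Rbar E); simpl; tauto.
Qed.

(* [real] maps [p_infty] and [m_infty] to [0]: this is why some bounds below need [0 <= _]. *)
Lemma real_Lub_Rbar_le (E : R -> Prop) B :
  (forall y, E y -> y <= B) -> 0 <= B -> real (Lub_Rbar E) <= B.
Proof. intros HB H0. generalize (Lub_Rbar_le E B HB). destruct (Lub_Rbar E); simpl; tauto. Qed.

Lemma real_Glb_Rbar_le (E : R -> Prop) x :
  E x -> (forall y, E y -> 0 <= y) -> real (Glb_Rbar E) <= x.
Proof.
  intros Ex H0. generalize (Glb_Rbar_le E x Ex) (Glb_Rbar_ge E 0 H0).
  destruct (Glb_Rbar E); simpl; tauto.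
Qed.

Lemma real_Glb_Rbar_ge (E : R -> Prop) x B :
  E x -> (forall y, E y -> B <= y) -> B <= real (Glb_Rbar E).
Proof.
  intros Ex HB. generalize (Glb_Rbar_le E x Ex) (Glb_Rbar_ge E B HB).
  destruct (Glb_Rbar E); simpl; tauto.
Qed.

Lemma exp_le_compat x y : x <= y -> exp x <= exp y.
Proof. intros [Hlt | ->]; [left; apply exp_increasing, Hlt | right; reflexivity]. Qed.

Lemma psum_ext f t t' n :
  (forall i, (i <= n)%nat -> t i = t' i) -> psum f t n = psum f t' n.
Proof.
  induction n as [|n IH]; intros H; simpl; [reflexivity|].
  rewrite IH by (intros; apply H; lia).
  rewrite (H n), (H (S n)) by lia. reflexivity.
Qed.

Lemma psum_ext_fun f f' t n :
  (forall i, (i < n)%nat -> f (t i) (t (S i)) = f' (t i) (t (S i))) -> psum f t n = psum f' t n.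
Proof.
  induction n as [|n IH]; intros H; simpl; [reflexivity|].
  rewrite IH by (intros; apply H; lia).
  rewrite H by lia. reflexivity.
Qed.

Lemma psum_le f g t n :
  (forall i, (i < n)%nat -> f (t i) (t (S i)) <= g (t i) (t (S i))) -> psum f t n <= psum g t n.
Proof.
  induction n as [|n IH]; intros H; simpl; [lra|].
  assert (psum f t n <= psum g t n) by (apply IH; intros; apply H; lia).
  specialize (H n ltac:(lia)). lra.
Qed.

Lemma psum_nonneg f t n :
  (forall i, (i < n)%nat -> 0 <= f (t i) (t (S i))) -> 0 <= psum f t n.
Proof.
  induction n as [|n IH]; intros H; simpl; [lra|].
  assert (0 <= psum f t n) by (apply IH; intros; apply H; lia).
  specialize (H n ltac:(lia)). lra.
Qed.

Lemma psum_shift f c t n :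
  psum (fun u v => f (u + c) (v + c)) t n = psum f (fun i => t i + c) n.
Proof. induction n as [|n IH]; simpl; [|rewrite IH]; reflexivity. Qed.

Lemma partition_monotone a b n t :
  partition a b n t -> forall i j, (i <= j <= n)%nat -> t i <= t j.
Proof.
  intros [_ [_ Ht]] i j [Hij Hjn]. induction j as [|j IH].
  - replace i with 0%nat by lia. lra.
  - destruct (Nat.eq_dec i (S j)) as [->|Hne]; [lra|].
    specialize (IH ltac:(lia) ltac:(lia)). specialize (Ht j ltac:(lia)). lra.
Qed.

Lemma partition_bounds a b n t :
  partition a b n t -> forall i, (i <= n)%nat -> a <= t i <= b.
Proof.
  intros Hp i Hi. pose proof (partition_monotone a b n t Hp) as Hmono.
  destruct Hp as [H0 [Hn _]]. rewrite <- H0, <- Hn. split; apply Hmono; lia.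
Qed.

Lemma partition_le a b n t : partition a b n t -> a <= b.
Proof. intros Hp. pose proof (partition_bounds a b n t Hp 0%nat ltac:(lia)). lra. Qed.

Lemma partition_trivial u : partition u u 0 (fun _ => u).
Proof. repeat split. intros; lia. Qed.

Definition single_pt (u v : R) : nat -> R := fun i => match i with O => u | _ => v end.

Lemma partition_single u v : u <= v -> partition u v 1 (single_pt u v).
Proof. intros Huv. repeat split. intros i Hi. replace i with 0%nat by lia. exact Huv. Qed.

Lemma psum_single f u v : psum f (single_pt u v) 1 = f u v.
Proof. simpl. ring. Qed.

Definition pair_pt (a m b : R) : nat -> R :=
  fun i => match i with O => a | 1%nat => m | _ => b end.

Lemma partition_pair a m b : a <= m -> m <= b -> partition a b 2 (pair_pt a m b).
Proof. intros. repeat split. intros [|[|i]] Hi; simpl; lra || lia. Qed.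

Lemma partition_init a b n t : partition a b (S n) t -> partition a (t n) n t.
Proof. intros [H0 [_ Ht]]. repeat split; auto. Qed.

Lemma partition_shift a b n t c :
  partition a b n t -> partition (a + c) (b + c) n (fun i => t i + c).
Proof.
  intros [H0 [Hn Ht]]. repeat split; [rewrite H0 | rewrite Hn |]; auto.
  intros i Hi. specialize (Ht i Hi). lra.
Qed.

Definition snoc_pt (t : nat -> R) (n : nat) (c : R) : nat -> R :=
  fun i => if Nat.leb i n then t i else c.

Lemma partition_snoc a b n t c :
  partition a b n t -> b <= c -> partition a c (S n) (snoc_pt t n c).
Proof.
  intros [H0 [Hn Ht]] Hc. unfold snoc_pt. repeat split.
  - exact H0.
  - rewrite (proj2 (Nat.leb_gt (S n) n)) by lia. reflexivity.
  - intros i Hi. destruct (Nat.leb_spec i n), (Nat.leb_spec (S i) n); try lia.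
    + apply Ht; lia.
    + replace i with n by lia. lra.
Qed.

Lemma psum_snoc f t n c : psum f (snoc_pt t n c) (S n) = psum f t n + f (t n) c.
Proof.
  simpl. unfold snoc_pt at 2 3. rewrite Nat.leb_refl, (proj2 (Nat.leb_gt (S n) n)) by lia.
  f_equal. apply psum_ext. intros i Hi. unfold snoc_pt. rewrite (proj2 (Nat.leb_le i n)) by lia.
  reflexivity.
Qed.

Definition cat_pt (t1 : nat -> R) (n1 : nat) (t2 : nat -> R) : nat -> R :=
  fun i => if Nat.leb i n1 then t1 i else t2 (i - n1)%nat.

Lemma psum_cat f t1 n1 t2 n2 : t1 n1 = t2 0%nat ->
  psum f (cat_pt t1 n1 t2) (n1 + n2) = psum f t1 n1 + psum f t2 n2.
Proof.
  intros Hj. induction n2 as [|n2 IH].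
  - rewrite Nat.add_0_r. simpl. rewrite Rplus_0_r. apply psum_ext.
    intros i Hi. unfold cat_pt. rewrite (proj2 (Nat.leb_le i n1)) by lia. reflexivity.
  - rewrite Nat.add_succ_r. simpl. rewrite IH. unfold cat_pt.
    rewrite (proj2 (Nat.leb_gt (S (n1 + n2)) n1)) by lia.
    replace (S (n1 + n2) - n1)%nat with (S n2) by lia.
    destruct (Nat.leb_spec (n1 + n2) n1).
    + replace n2 with 0%nat by lia. rewrite Nat.add_0_r, Hj. simpl. ring.
    + replace (n1 + n2 - n1)%nat with n2 by lia. ring.
Qed.

Lemma partition_cat u v w n1 t1 n2 t2 :
  partition u v n1 t1 -> partition v w n2 t2 -> partition u w (n1 + n2) (cat_pt t1 n1 t2).
Proof.
  intros [A0 [An Am]] [B0 [Bn Bm]]. unfold cat_pt. repeat split.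
  - exact A0.
  - destruct (Nat.leb_spec (n1 + n2) n1).
    + replace n2 with 0%nat in * by lia. rewrite Nat.add_0_r, An, <- B0, Bn. reflexivity.
    + replace (n1 + n2 - n1)%nat with n2 by lia. exact Bn.
  - intros i Hi. destruct (Nat.leb_spec i n1), (Nat.leb_spec (S i) n1); try lia.
    + apply Am; lia.
    + replace i with n1 by lia. replace (S n1 - n1)%nat with 1%nat by lia.
      rewrite An, <- B0. apply Bm. lia.
    + replace (S i - n1)%nat with (S (i - n1)) by lia. apply Bm. lia.
Qed.

Lemma psum_refine (f : R -> R -> R) (A B : R)
  (Hsub : forall u v w, A <= u -> u <= v -> v <= w -> w <= B -> f u w <= f u v + f v w) :
  forall n u w t, partition u w n t -> A <= u -> w <= B -> forall v, u <= v <= w ->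
  exists n1 t1 n2 t2, partition u v n1 t1 /\ partition v w n2 t2 /\
     psum f t n <= psum f t1 n1 + psum f t2 n2.
Proof.
  induction n as [|n IH]; intros u w t Hp HA HB v Hv.
  - destruct Hp as [H0 [Hn _]]. simpl in Hn. subst u w. replace v with (t 0%nat) by lra.
    exists 0%nat, (fun _ => t 0%nat), 0%nat, (fun _ => t 0%nat).
    split; [apply partition_trivial | split; [apply partition_trivial | simpl; lra]].
  - pose proof (partition_init _ _ _ _ Hp) as Hinit.
    pose proof (partition_bounds _ _ _ _ Hp n ltac:(lia)) as Htn.
    destruct Hp as [H0 [Hn Ht]]. specialize (Ht n ltac:(lia)).
    destruct (Rle_dec v (t n)) as [Hvn | Hvn].
    + destruct (IH u (t n) t Hinit HA ltac:(lra) v ltac:(lra))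
        as [n1 [t1 [n2 [t2 [P1 [P2 Hs]]]]]].
      exists n1, t1, (S n2), (snoc_pt t2 n2 w).
      split; [exact P1 | split; [apply (partition_snoc v (t n)); auto; lra |]].
      rewrite psum_snoc. destruct P2 as [_ [-> _]]. simpl. rewrite Hn. lra.
    + exists (S n), (snoc_pt t n v), 1%nat, (single_pt v w).
      split; [apply (partition_snoc u (t n)); auto; lra |].
      split; [apply partition_single; lra |].
      rewrite psum_snoc, psum_single. simpl. rewrite Hn.
      pose proof (Hsub (t n) v w ltac:(lra) ltac:(lra) ltac:(lra) ltac:(lra)). lra.
Qed.

(** * Length of curves *)

Definition isometric_on {X : Type} (d : X -> X -> R) (g : R -> X) (a b : R) : Prop :=
  forall s t, a <= s <= b -> a <= t <= b -> d (g s) (g t) = Rabs (s - t).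

Section CurveLength.
Context {X : Type} (dd : X -> X -> R).
Hypothesis dd_nonneg : forall x y, 0 <= dd x y.
Hypothesis dd_triangle : forall x y z, dd x z <= dd x y + dd y z.

Definition chord (g : R -> X) : R -> R -> R := fun u v => dd (g u) (g v).

Lemma curve_length_ge_psum g u v n t :
  partition u v n t -> Rbar_le (psum (chord g) t n) (curve_length dd g u v).
Proof. intros Hp. apply Lub_Rbar_ge. exists n, t. split; auto. Qed.

Lemma curve_length_ge_dist g u v : u <= v -> Rbar_le (dd (g u) (g v)) (curve_length dd g u v).
Proof.
  intros Huv. pose proof (curve_length_ge_psum g u v 1 _ (partition_single u v Huv)) as H.
  rewrite psum_single in H. exact H.
Qed.

Lemma curve_length_nonneg g u v : u <= v -> Rbar_le 0 (curve_length dd g u v).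
Proof.
  intros Huv. apply Rbar_le_trans with (Finite (dd (g u) (g v))).
  - apply dd_nonneg.
  - apply curve_length_ge_dist, Huv.
Qed.

Lemma curve_length_subinterval g a u v b : a <= u -> u <= v -> v <= b ->
  Rbar_le (curve_length dd g u v) (curve_length dd g a b).
Proof.
  intros Hau Huv Hvb. apply Lub_Rbar_le_Lub_Rbar. intros x [n [t [Hp ->]]].
  pose proof (partition_cat a u v 1 _ n t (partition_single a u Hau) Hp) as Hcat.
  eexists. split.
  - exists (S (1 + n)), (snoc_pt (cat_pt (single_pt a u) 1 t) (1 + n) b).
    split; [exact (partition_snoc _ _ _ _ b Hcat Hvb) | reflexivity].
  - rewrite psum_snoc, psum_cat, psum_single by (destruct Hp as [-> _]; reflexivity).
    unfold chord.
    pose proof (dd_nonneg (g a) (g u)).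
    pose proof (dd_nonneg (g (cat_pt (single_pt a u) 1 t (1 + n))) (g b)). lra.
Qed.

Lemma curve_length_ext g g' u v : (forall w, u <= w <= v -> g w = g' w) ->
  curve_length dd g u v = curve_length dd g' u v.
Proof.
  intros H. apply Lub_Rbar_eqset. intros x.
  split; intros [n [t [Hp ->]]]; exists n, t; split; auto;
    apply psum_ext_fun; intros i Hi;
    pose proof (partition_bounds _ _ _ _ Hp i ltac:(lia));
    pose proof (partition_bounds _ _ _ _ Hp (S i) ltac:(lia));
    rewrite !H by lra; reflexivity.
Qed.

Lemma curve_length_shift g c u v :
  curve_length dd (fun s => g (s + c)) u v = curve_length dd g (u + c) (v + c).
Proof.
  apply Lub_Rbar_eqset. intros x. split; intros [n [t [Hp ->]]].
  - exists n, (fun i => t i + c). split; [apply partition_shift, Hp|].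
    apply (psum_shift (chord g)).
  - exists n, (fun i => t i - c). split.
    + replace u with (u + c + - c) by ring. replace v with (v + c + - c) by ring.
      apply partition_shift, Hp.
    + rewrite (psum_shift (fun u v => dd (g u) (g v))). apply psum_ext. intros. f_equal. ring.
Qed.

Definition arc_length (g : R -> X) (u v : R) : R := real (curve_length dd g u v).

Section FiniteLength.
Variables (g : R -> X) (a b : R).
Hypothesis length_finite : is_finite (curve_length dd g a b).

Lemma curve_length_finite_sub u v : a <= u -> u <= v -> v <= b ->
  curve_length dd g u v = arc_length g u v.
Proof.
  intros Hau Huv Hvb. pose proof (curve_length_subinterval g a u v b Hau Huv Hvb) as Hsub.
  pose proof (curve_length_nonneg g u v Huv) as H0.
  unfold arc_length. rewrite <- length_finite in Hsub.
  destruct (curve_length dd g u v); simpl in *; tauto.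
Qed.

Lemma dist_le_arc_length u v : a <= u -> u <= v -> v <= b -> dd (g u) (g v) <= arc_length g u v.
Proof.
  intros Hau Huv Hvb. pose proof (curve_length_ge_dist g u v Huv) as H.
  rewrite (curve_length_finite_sub u v) in H by assumption. exact H.
Qed.

Lemma arc_length_nonneg u v : a <= u -> u <= v -> v <= b -> 0 <= arc_length g u v.
Proof.
  intros. apply Rle_trans with (dd (g u) (g v)); [apply dd_nonneg | apply dist_le_arc_length; auto].
Qed.

Lemma arc_length_ge_psum u v n t : a <= u -> v <= b ->
  partition u v n t -> psum (chord g) t n <= arc_length g u v.
Proof.
  intros Hau Hvb Hp. pose proof (curve_length_ge_psum g u v n t Hp) as H.
  rewrite (curve_length_finite_sub u v) in H by (pose proof (partition_le _ _ _ _ Hp); lra).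
  exact H.
Qed.

Lemma arc_length_subadditive u v w : a <= u -> u <= v -> v <= w -> w <= b ->
  arc_length g u w <= arc_length g u v + arc_length g v w.
Proof.
  intros Hau Huv Hvw Hwb.
  assert (Hle : Rbar_le (curve_length dd g u w) (arc_length g u v + arc_length g v w)).
  { apply Lub_Rbar_le. intros x [n [t [Hp ->]]].
    assert (Hchord : forall u0 v0 w0, a <= u0 -> u0 <= v0 -> v0 <= w0 -> w0 <= b ->
                       chord g u0 w0 <= chord g u0 v0 + chord g v0 w0)
      by (intros; apply dd_triangle).
    destruct (psum_refine (chord g) a b Hchord n u w t Hp Hau Hwb v ltac:(lra))
      as [n1 [t1 [n2 [t2 [P1 [P2 Hs]]]]]].
    pose proof (arc_length_ge_psum u v n1 t1 Hau ltac:(lra) P1).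
    pose proof (arc_length_ge_psum v w n2 t2 ltac:(lra) Hwb P2). unfold chord in *. lra. }
  rewrite (curve_length_finite_sub u w) in Hle by lra. exact Hle.
Qed.

Lemma arc_length_superadditive u v w : a <= u -> u <= v -> v <= w -> w <= b ->
  arc_length g u v + arc_length g v w <= arc_length g u w.
Proof.
  intros Hau Huv Hvw Hwb.
  assert (Hcat : forall s1 s2,
             (exists n t, partition u v n t /\ s1 = psum (chord g) t n) ->
             (exists n t, partition v w n t /\ s2 = psum (chord g) t n) ->
             s1 + s2 <= arc_length g u w).
  { intros s1 s2 [n1 [t1 [P1 ->]]] [n2 [t2 [P2 ->]]].
    assert (J : t1 n1 = t2 0%nat) by (destruct P1 as [_ [-> _]]; destruct P2 as [-> _]; reflexivity).
    rewrite <- (psum_cat _ _ _ _ _ J).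
    apply (arc_length_ge_psum u w); [lra | lra | eapply partition_cat; eauto]. }
  assert (Hvw_le : Rbar_le (curve_length dd g v w) (arc_length g u w - arc_length g u v)).
  { apply Lub_Rbar_le. intros s2 Hs2.
    assert (Huv_le : Rbar_le (curve_length dd g u v) (arc_length g u w - s2)).
    { apply Lub_Rbar_le. intros s1 Hs1. pose proof (Hcat s1 s2 Hs1 Hs2). lra. }
    rewrite (curve_length_finite_sub u v) in Huv_le by lra. simpl in Huv_le. lra. }
  rewrite (curve_length_finite_sub v w) in Hvw_le by lra. simpl in Hvw_le. lra.
Qed.

Lemma psum_arc_length_le n u w t : partition u w n t -> a <= u -> w <= b ->
  psum (arc_length g) t n <= arc_length g u w.
Proof.
  revert u w t. induction n as [|n IH]; intros u w t Hp Hau Hwb.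
  - destruct Hp as [H0 [Hn _]]. simpl in *. subst u w. apply arc_length_nonneg; lra.
  - pose proof (partition_bounds _ _ _ _ Hp n ltac:(lia)) as Htn.
    pose proof (IH u (t n) t (partition_init _ _ _ _ Hp) Hau ltac:(lra)).
    destruct Hp as [_ [Hn Ht]]. specialize (Ht n ltac:(lia)). simpl. rewrite <- Hn.
    pose proof (arc_length_superadditive u (t n) (t (S n)) Hau ltac:(lra) Ht ltac:(lra)). lra.
Qed.

End FiniteLength.

Lemma curve_length_split_finite g a m b : a <= m <= b ->
  is_finite (curve_length dd g a m) -> is_finite (curve_length dd g m b) ->
  is_finite (curve_length dd g a b).
Proof.
  intros Hm Ham Hmb.
  assert (Hle : Rbar_le (curve_length dd g a b) (arc_length g a m + arc_length g m b)).
  { apply Lub_Rbar_le. intros x [n [t [Hp ->]]].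
    assert (Hchord : forall u v w, a <= u -> u <= v -> v <= w -> w <= b ->
                       chord g u w <= chord g u v + chord g v w)
      by (intros; apply dd_triangle).
    destruct (psum_refine (chord g) a b Hchord n a b t Hp ltac:(lra) ltac:(lra) m Hm)
      as [n1 [t1 [n2 [t2 [P1 [P2 Hs]]]]]].
    pose proof (arc_length_ge_psum g a m Ham a m n1 t1 ltac:(lra) ltac:(lra) P1).
    pose proof (arc_length_ge_psum g m b Hmb m b n2 t2 ltac:(lra) ltac:(lra) P2).
    unfold chord in *. lra. }
  pose proof (curve_length_nonneg g a b ltac:(lra)) as H0.
  unfold is_finite. destruct (curve_length dd g a b); simpl in *; tauto.
Qed.

Lemma curve_length_isometry g a b u v : isometric_on dd g a b ->
  a <= u -> u <= v -> v <= b -> curve_length dd g u v = v - u.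
Proof.
  intros Hiso Hau Huv Hvb. apply Rbar_le_antisym.
  - apply Lub_Rbar_le. intros x [n [t [Hp ->]]].
    pose proof (partition_bounds _ _ _ _ Hp) as Hbounds. destruct Hp as [H0 [Hn Ht]].
    rewrite <- H0, <- Hn. clear H0 Hn.
    induction n as [|n IH]; simpl; [lra|].
    assert (psum (chord g) t n <= t n - t 0%nat) by (apply IH; intros; [apply Ht | apply Hbounds]; lia).
    pose proof (Hbounds n ltac:(lia)). pose proof (Hbounds (S n) ltac:(lia)).
    specialize (Ht n ltac:(lia)). unfold chord in *. rewrite Hiso, Rabs_left1 by lra. lra.
  - pose proof (curve_length_ge_dist g u v Huv) as H.
    rewrite Hiso, Rabs_left1 in H by lra. replace (v - u) with (- (u - v)) by ring. exact H.
Qed.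

End CurveLength.

Section MetricFacts.
Context {X : Type} {d : X -> X -> R} (d_metric : is_metric d).

Lemma metric_nonneg x y : 0 <= d x y.
Proof. apply d_metric. Qed.

Lemma metric_sym x y : d x y = d y x.
Proof. apply d_metric. Qed.

Lemma metric_triangle x y z : d x z <= d x y + d y z.
Proof. apply d_metric. Qed.

Lemma metric_refl x : d x x = 0.
Proof. apply d_metric. reflexivity. Qed.

Lemma metric_eq x y : d x y = 0 -> x = y.
Proof. apply d_metric. Qed.

End MetricFacts.

(** * Line integrals *)

Section LineIntegral.
Context {X : Type} {d : X -> X -> R} (d_metric : is_metric d).
Variable rho : X -> R.
Hypothesis rho_nonneg : forall z, 0 <= rho z.
Hypothesis rho_le_1 : forall z, rho z <= 1.

Let d_nonneg := metric_nonneg d_metric.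
Let d_triangle := metric_triangle d_metric.

Definition density_inf (g : R -> X) (u v : R) : R :=
  real (Glb_Rbar (fun r => exists w, u <= w <= v /\ r = rho (g w))).

Definition darboux_term (g : R -> X) (u v : R) : R :=
  density_inf g u v * arc_length d g u v.

Lemma line_integral_darboux g a b : line_integral d rho g a b =
  real (Lub_Rbar (fun s => exists n t, partition a b n t /\ s = psum (darboux_term g) t n)).
Proof. reflexivity. Qed.

Lemma density_inf_le g u v w : u <= w <= v -> density_inf g u v <= rho (g w).
Proof.
  intros Hw. apply real_Glb_Rbar_le; [exists w; auto |].
  intros y [w' [_ ->]]. apply rho_nonneg.
Qed.

Lemma density_inf_ge g u v B : u <= v ->
  (forall w, u <= w <= v -> B <= rho (g w)) -> B <= density_inf g u v.
Proof.
  intros Huv HB. apply real_Glb_Rbar_ge with (x := rho (g u)); [exists u; split; [lra | auto] |].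
  intros y [w [Hw ->]]. apply HB, Hw.
Qed.

Lemma density_inf_nonneg g u v : u <= v -> 0 <= density_inf g u v.
Proof. intros Huv. apply density_inf_ge; auto. Qed.

Lemma density_inf_le_1 g u v : u <= v -> density_inf g u v <= 1.
Proof.
  intros Huv. apply Rle_trans with (rho (g u)); [apply density_inf_le; lra | apply rho_le_1].
Qed.

Lemma density_inf_antimonotone g u v u' v' : u' <= u -> u <= v -> v <= v' ->
  density_inf g u' v' <= density_inf g u v.
Proof. intros. apply density_inf_ge; auto. intros w Hw. apply density_inf_le. lra. Qed.

Lemma density_inf_ext g g' u v : (forall w, u <= w <= v -> g w = g' w) ->
  density_inf g u v = density_inf g' u v.
Proof.
  intros H. unfold density_inf. f_equal. apply Glb_Rbar_eqset. intros x.
  split; intros [w [Hw ->]]; exists w; split; auto; rewrite H; auto.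
Qed.

Lemma density_inf_shift g c u v :
  density_inf (fun s => g (s + c)) u v = density_inf g (u + c) (v + c).
Proof.
  unfold density_inf. f_equal. apply Glb_Rbar_eqset. intros x. split; intros [w [Hw ->]].
  - exists (w + c). split; [lra | reflexivity].
  - exists (w - c). split; [lra |]. replace (w - c + c) with w by ring. reflexivity.
Qed.

Lemma darboux_term_ext g g' u v : (forall w, u <= w <= v -> g w = g' w) ->
  darboux_term g u v = darboux_term g' u v.
Proof.
  intros H. unfold darboux_term, arc_length.
  rewrite (density_inf_ext g g' u v H), (curve_length_ext d g g' u v H). reflexivity.
Qed.

Lemma darboux_term_shift g c u v :
  darboux_term (fun s => g (s + c)) u v = darboux_term g (u + c) (v + c).
Proof.
  unfold darboux_term, arc_length. rewrite density_inf_shift, curve_length_shift. reflexivity.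
Qed.

Section FiniteLength.
Variables (g : R -> X) (a b : R).
Hypothesis length_finite : is_finite (curve_length d g a b).

Lemma darboux_term_nonneg u v : a <= u -> u <= v -> v <= b -> 0 <= darboux_term g u v.
Proof.
  intros. apply Rmult_le_pos; [apply density_inf_nonneg; lra |].
  apply (arc_length_nonneg d d_nonneg g a b); auto.
Qed.

Lemma darboux_term_le_arc_length u v : a <= u -> u <= v -> v <= b ->
  darboux_term g u v <= arc_length d g u v.
Proof.
  intros Hau Huv Hvb. pose proof (arc_length_nonneg d d_nonneg g a b length_finite u v Hau Huv Hvb).
  pose proof (density_inf_le_1 g u v Huv). pose proof (density_inf_nonneg g u v Huv).
  unfold darboux_term. nra.
Qed.

Lemma darboux_term_subadditive u v w : a <= u -> u <= v -> v <= w -> w <= b ->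
  darboux_term g u w <= darboux_term g u v + darboux_term g v w.
Proof.
  intros Hau Huv Hvw Hwb. unfold darboux_term.
  pose proof (arc_length_subadditive d d_nonneg d_triangle g a b length_finite u v w) as Hsub.
  pose proof (arc_length_nonneg d d_nonneg g a b length_finite u v) as H1.
  pose proof (arc_length_nonneg d d_nonneg g a b length_finite v w) as H2.
  pose proof (density_inf_antimonotone g u v u w ltac:(lra) Huv Hvw).
  pose proof (density_inf_antimonotone g v w u w Huv Hvw ltac:(lra)).
  pose proof (density_inf_nonneg g u w ltac:(lra)).
  apply Rle_trans with (density_inf g u w * (arc_length d g u v + arc_length d g v w)).
  - apply Rmult_le_compat_l; auto.
  - nra.
Qed.

Lemma darboux_sum_bounds n t s : partition a b n t -> s = psum (darboux_term g) t n ->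
  0 <= s <= arc_length d g a b.
Proof.
  intros Hp ->. pose proof (partition_bounds _ _ _ _ Hp) as Hbounds.
  pose proof Hp as [_ [_ Ht]]. split.
  - apply psum_nonneg. intros i Hi.
    pose proof (Hbounds i ltac:(lia)). pose proof (Hbounds (S i) ltac:(lia)).
    specialize (Ht i Hi). apply darboux_term_nonneg; lra.
  - apply Rle_trans with (psum (arc_length d g) t n).
    + apply psum_le. intros i Hi.
      pose proof (Hbounds i ltac:(lia)). pose proof (Hbounds (S i) ltac:(lia)).
      specialize (Ht i Hi). apply darboux_term_le_arc_length; lra.
    + apply (psum_arc_length_le d d_nonneg g a b length_finite n a b t Hp); lra.
Qed.

Lemma line_integral_ge_psum n t : partition a b n t ->
  psum (darboux_term g) t n <= line_integral d rho g a b.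
Proof.
  intros Hp. rewrite line_integral_darboux.
  apply real_Lub_Rbar_ge with (B := arc_length d g a b); [exists n, t; auto |].
  intros y [n' [t' [Hp' Hy]]]. apply (darboux_sum_bounds n' t' y Hp' Hy).
Qed.

Lemma line_integral_nonneg : a <= b -> 0 <= line_integral d rho g a b.
Proof.
  intros Hab. pose proof (line_integral_ge_psum 1 _ (partition_single a b Hab)) as H.
  rewrite psum_single in H. pose proof (darboux_term_nonneg a b). lra.
Qed.

End FiniteLength.

Lemma line_integral_le g a b B : 0 <= B ->
  (forall n t, partition a b n t -> psum (darboux_term g) t n <= B) ->
  line_integral d rho g a b <= B.
Proof.
  intros H0 H. rewrite line_integral_darboux. apply real_Lub_Rbar_le; auto.
  intros y [n [t [Hp ->]]]. apply H, Hp.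
Qed.

Lemma line_integral_ext g g' a b : (forall w, a <= w <= b -> g w = g' w) ->
  line_integral d rho g a b = line_integral d rho g' a b.
Proof.
  intros H. rewrite !line_integral_darboux. f_equal. apply Lub_Rbar_eqset. intros x.
  split; intros [n [t [Hp ->]]]; exists n, t; split; auto;
    apply psum_ext_fun; intros i Hi;
    pose proof (partition_bounds _ _ _ _ Hp i ltac:(lia));
    pose proof (partition_bounds _ _ _ _ Hp (S i) ltac:(lia));
    apply darboux_term_ext; intros w Hw; [| symmetry]; apply H; lra.
Qed.

Lemma line_integral_shift g c a b :
  line_integral d rho (fun s => g (s + c)) a b = line_integral d rho g (a + c) (b + c).
Proof.
  rewrite !line_integral_darboux. f_equal. apply Lub_Rbar_eqset. intros x.
  split; intros [n [t [Hp ->]]].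
  - exists n, (fun i => t i + c). split; [apply partition_shift, Hp |].
    rewrite <- psum_shift. apply psum_ext_fun. intros. apply darboux_term_shift.
  - exists n, (fun i => t i - c). split.
    + replace a with (a + c + - c) by ring. replace b with (b + c + - c) by ring.
      apply partition_shift, Hp.
    + rewrite (psum_ext_fun (darboux_term (fun s => g (s + c)))
                 (fun u v => darboux_term g (u + c) (v + c)))
        by (intros; apply darboux_term_shift).
      rewrite psum_shift. apply psum_ext. intros. f_equal. ring.
Qed.

Lemma line_integral_split_le g a m b : is_finite (curve_length d g a b) -> a <= m <= b ->
  line_integral d rho g a b <= line_integral d rho g a m + line_integral d rho g m b.
Proof.
  intros Hfin Hm.
  assert (Ham : is_finite (curve_length d g a m))
    by (unfold is_finite; rewrite (curve_length_finite_sub d d_nonneg g a b Hfin a m) by lra; reflexivity).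
  assert (Hmb : is_finite (curve_length d g m b))
    by (unfold is_finite; rewrite (curve_length_finite_sub d d_nonneg g a b Hfin m b) by lra; reflexivity).
  apply line_integral_le.
  - pose proof (line_integral_nonneg g a m Ham ltac:(lra)).
    pose proof (line_integral_nonneg g m b Hmb ltac:(lra)). lra.
  - intros n t Hp.
    destruct (psum_refine (darboux_term g) a b (darboux_term_subadditive g a b Hfin)
                n a b t Hp ltac:(lra) ltac:(lra) m Hm) as [n1 [t1 [n2 [t2 [P1 [P2 Hs]]]]]].
    pose proof (line_integral_ge_psum g a m Ham n1 t1 P1).
    pose proof (line_integral_ge_psum g m b Hmb n2 t2 P2). lra.
Qed.

Lemma rectifiable_isometry g a b : isometric_on d g a b -> a <= b -> rectifiable d g a b.
Proof.
  intros Hiso Hab. split; [exact Hab | split].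
  - intros t Ht e He. exists e. split; [exact He |]. intros s Hs Hst. rewrite Hiso by lra. exact Hst.
  - rewrite (curve_length_isometry d g a b a b Hiso) by lra. reflexivity.
Qed.

Lemma line_integral_isometry_le g a b (G : R -> R) : isometric_on d g a b -> a <= b ->
  (forall u v, a <= u -> u <= v -> v <= b -> density_inf g u v * (v - u) <= G v - G u) ->
  line_integral d rho g a b <= G b - G a.
Proof.
  intros Hiso Hab HG. apply line_integral_le.
  - pose proof (HG a b ltac:(lra) Hab ltac:(lra)). pose proof (density_inf_nonneg g a b Hab). nra.
  - intros n t Hp. pose proof (partition_bounds _ _ _ _ Hp) as Hbounds.
    destruct Hp as [H0 [Hn Ht]]. rewrite <- H0, <- Hn. clear H0 Hn.
    induction n as [|n IH]; simpl; [lra |].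
    assert (psum (darboux_term g) t n <= G (t n) - G (t 0%nat))
      by (apply IH; intros; [apply Ht | apply Hbounds]; lia).
    pose proof (Hbounds n ltac:(lia)). pose proof (Hbounds (S n) ltac:(lia)).
    specialize (Ht n ltac:(lia)).
    pose proof (HG (t n) (t (S n)) ltac:(lra) Ht ltac:(lra)).
    assert (darboux_term g (t n) (t (S n)) = density_inf g (t n) (t (S n)) * (t (S n) - t n))
      by (unfold darboux_term, arc_length; rewrite (curve_length_isometry d g a b) by (auto; lra);
          reflexivity).
    lra.
Qed.

Lemma rectifiable_shift g c a b :
  rectifiable d g (a + c) (b + c) -> rectifiable d (fun s => g (s + c)) a b.
Proof.
  intros [Hab [Hcont Hfin]]. split; [lra | split].
  - intros t Ht e He. destruct (Hcont (t + c) ltac:(lra) e He) as [eta [Heta K]].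
    exists eta. split; [exact Heta |]. intros s Hs Hst. apply K; [lra |].
    replace (s + c - (t + c)) with (s - t) by ring. exact Hst.
  - rewrite curve_length_shift. exact Hfin.
Qed.

Definition glue (g1 g2 : R -> X) (m : R) : R -> X :=
  fun t => if Rle_dec t m then g1 t else g2 t.

Lemma glue_left g1 g2 m t : t <= m -> glue g1 g2 m t = g1 t.
Proof. intros H. unfold glue. destruct (Rle_dec t m); [reflexivity | lra]. Qed.

Lemma glue_right g1 g2 m t : g1 m = g2 m -> m <= t -> glue g1 g2 m t = g2 t.
Proof.
  intros E H. unfold glue. destruct (Rle_dec t m); [replace t with m by lra; exact E | reflexivity].
Qed.

Lemma continuous_on_glue g1 g2 a m b : g1 m = g2 m ->
  continuous_on d g1 a m -> continuous_on d g2 m b -> continuous_on d (glue g1 g2 m) a b.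
Proof.
  intros E C1 C2 t Ht e He.
  destruct (Rlt_le_dec t m) as [Htm | Hmt].
  - destruct (C1 t ltac:(lra) e He) as [eta [Heta K]].
    exists (Rmin eta (m - t)). split; [apply Rmin_case; lra |]. intros s Hs Hst.
    pose proof (Rmin_l eta (m - t)). pose proof (Rmin_r eta (m - t)).
    apply Rabs_lt_between in Hst as Hst'.
    rewrite !glue_left by lra. apply K; lra.
  - destruct (Rle_lt_or_eq_dec m t Hmt) as [Hmt' | <-].
    + destruct (C2 t ltac:(lra) e He) as [eta [Heta K]].
      exists (Rmin eta (t - m)). split; [apply Rmin_case; lra |]. intros s Hs Hst.
      pose proof (Rmin_l eta (t - m)). pose proof (Rmin_r eta (t - m)).
      apply Rabs_lt_between in Hst as Hst'.
      rewrite !glue_right by (auto; lra). apply K; lra.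
    + destruct (C1 m ltac:(lra) e He) as [eta1 [Heta1 K1]].
      destruct (C2 m ltac:(lra) e He) as [eta2 [Heta2 K2]].
      exists (Rmin eta1 eta2). split; [apply Rmin_case; lra |]. intros s Hs Hst.
      pose proof (Rmin_l eta1 eta2). pose proof (Rmin_r eta1 eta2).
      rewrite (glue_left g1 g2 m m) by lra.
      destruct (Rle_dec s m).
      * rewrite glue_left by lra. apply K1; lra.
      * rewrite glue_right, E by (auto; lra). apply K2; lra.
Qed.

Section Glue.
Variables (g1 g2 : R -> X) (a m b : R).
Hypothesis g1_rect : rectifiable d g1 a m.
Hypothesis g2_rect : rectifiable d g2 m b.
Hypothesis glue_point : g1 m = g2 m.

Lemma glue_on_left u v : a <= u -> v <= m ->
  forall w, u <= w <= v -> glue g1 g2 m w = g1 w.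
Proof. intros. apply glue_left. lra. Qed.

Lemma glue_on_right u v : m <= u ->
  forall w, u <= w <= v -> glue g1 g2 m w = g2 w.
Proof. intros. apply glue_right; auto; lra. Qed.

Lemma rectifiable_glue : rectifiable d (glue g1 g2 m) a b.
Proof.
  destruct g1_rect as [Ham [C1 F1]], g2_rect as [Hmb [C2 F2]].
  split; [lra | split; [apply continuous_on_glue; auto |]].
  apply (curve_length_split_finite d d_nonneg d_triangle _ a m b); [lra | |].
  - rewrite (curve_length_ext d _ g1 a m (glue_on_left a m ltac:(lra) ltac:(lra))). exact F1.
  - rewrite (curve_length_ext d _ g2 m b (glue_on_right m b ltac:(lra))). exact F2.
Qed.

Lemma line_integral_glue_le : line_integral d rho (glue g1 g2 m) a b <=
  line_integral d rho g1 a m + line_integral d rho g2 m b.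
Proof.
  destruct g1_rect as [Ham _], g2_rect as [Hmb _], rectifiable_glue as [_ [_ Hfin]].
  rewrite <- (line_integral_ext _ g1 a m (glue_on_left a m ltac:(lra) ltac:(lra))).
  rewrite <- (line_integral_ext _ g2 m b (glue_on_right m b ltac:(lra))).
  apply line_integral_split_le; [exact Hfin | lra].
Qed.

End Glue.

End LineIntegral.

Arguments darboux_term {X} d rho g u v.

(** * The uniformized distance *)

Lemma exp_left_endpoint_le eps u v : 0 < eps -> u <= v ->
  exp (eps * u) * (v - u) <= (exp (eps * v) - exp (eps * u)) / eps.
Proof.
  intros Heps Huv. pose proof (exp_ineq1_le (eps * (v - u))) as Hineq.
  replace (exp (eps * v)) with (exp (eps * u) * exp (eps * (v - u)))
    by (rewrite <- exp_plus; f_equal; ring).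
  pose proof (exp_pos (eps * u)).
  apply Rmult_le_reg_r with eps; [exact Heps |].
  set (E := exp (eps * u) * exp (eps * (v - u)) - exp (eps * u)).
  replace (E / eps * eps) with E by (field; lra). unfold E. nra.
Qed.

Lemma last_time_above (f : R -> R) a b c : a <= b ->
  continuous_on (fun x y => Rabs (x - y)) f a b -> c <= f a -> f b <= c ->
  exists ts, a <= ts <= b /\ c <= f ts /\ forall w, ts <= w <= b -> f w <= c.
Proof.
  intros Hab Hcont Ha Hb.
  set (S := fun t => a <= t <= b /\ c <= f t).
  destruct (completeness S) as [ts [Hub Hlub]];
    [exists b; intros t [Ht _]; lra | exists a; split; [lra | exact Ha] |].
  assert (Hts : a <= ts <= b)
    by (split; [apply Hub; split; [lra | exact Ha] | apply Hlub; intros t [Ht _]; lra]).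
  assert (Hfts : c <= f ts).
  { apply Rnot_lt_le. intros Hlt.
    destruct (Hcont ts Hts (c - f ts) ltac:(lra)) as [eta [Heta K]].
    enough (ts <= ts - eta) by lra.
    apply Hlub. intros t [Ht Hft]. pose proof (Hub t (conj Ht Hft)).
    apply Rnot_lt_le. intros Hl.
    assert (Hclose : Rabs (t - ts) < eta) by (apply Rabs_def1; lra).
    specialize (K t Ht Hclose). apply Rabs_lt_between in K. lra. }
  exists ts. split; [exact Hts | split; [exact Hfts |]].
  intros w Hw. apply Rnot_lt_le. intros Hl.
  destruct (Rle_lt_or_eq_dec ts w (proj1 Hw)) as [Hlt | <-].
  - assert (Sw : S w) by (split; lra). pose proof (Hub w Sw). lra.
  - assert (Htb : ts < b) by (destruct (Rle_lt_or_eq_dec ts b (proj2 Hts)) as [? | ->]; lra).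
    destruct (Hcont ts Hts (f ts - c) ltac:(lra)) as [eta [Heta K]].
    set (w := Rmin (ts + eta / 2) b).
    assert (ts < w) by (unfold w; apply Rmin_case; lra).
    assert (w <= ts + eta / 2) by apply Rmin_l.
    assert (w <= b) by apply Rmin_r.
    assert (Hclose : Rabs (w - ts) < eta) by (apply Rabs_def1; lra).
    specialize (K w ltac:(lra) Hclose). apply Rabs_lt_between in K.
    assert (Sw : S w) by (split; lra). pose proof (Hub w Sw). lra.
Qed.

Section UniformizedDistance.
Context {X : Type} {d : X -> X -> R} (d_metric : is_metric d).
Variables (p : X) (eps : R).
Hypothesis eps_pos : 0 < eps.
Hypothesis d_geodesic : geodesic_space d.

Let d_nonneg := metric_nonneg d_metric.
Let d_triangle := metric_triangle d_metric.

Definition density (z : X) : R := exp (- eps * d p z).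

Lemma density_nonneg z : 0 <= density z.
Proof. left. apply exp_pos. Qed.

Lemma density_le_1 z : density z <= 1.
Proof. rewrite <- exp_0. apply exp_le_compat. pose proof (d_nonneg p z). nra. Qed.

Notation e := (d_eps d p eps).
Notation L := (line_integral d density).
Notation inf_density := (density_inf density).

Lemma geodesic_isometric x y s : geodesic_segment d x y s -> isometric_on d s 0 (d x y).
Proof. intros [_ [_ H]] u v Hu Hv. apply H; auto. Qed.

Lemma geodesic_rectifiable x y s : geodesic_segment d x y s -> rectifiable d s 0 (d x y).
Proof.
  intros Hs. apply rectifiable_isometry; [exact (geodesic_isometric x y s Hs) |].
  apply d_nonneg.
Qed.

Lemma d_eps_le_line_integral g a b : rectifiable d g a b -> e (g a) (g b) <= L g a b.
Proof.
  intros Hr. apply real_Glb_Rbar_le; [exists g, a, b; auto |].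
  intros y [g' [a' [b' [[Hab [_ Hfin]] [_ [_ ->]]]]]].
  apply (line_integral_nonneg d_metric density density_nonneg density_le_1); auto.
Qed.

Lemma d_eps_ge x y B :
  (forall g a b, rectifiable d g a b -> g a = x -> g b = y -> B <= L g a b) -> B <= e x y.
Proof.
  intros H. destruct (d_geodesic x y) as [s Hs].
  apply real_Glb_Rbar_ge with (x := L s 0 (d x y)).
  - exists s, 0, (d x y). pose proof (geodesic_rectifiable x y s Hs) as Hrect.
    destruct Hs as (Hs0 & Hs1 & _). split; [exact Hrect | auto].
  - intros z (g & a & b & Hr & Ha & Hb & ->). apply H; auto.
Qed.

Lemma d_eps_nonneg x y : 0 <= e x y.
Proof.
  apply d_eps_ge. intros g a b [Hab [_ Hfin]] _ _.
  apply (line_integral_nonneg d_metric density density_nonneg density_le_1); auto.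
Qed.

Lemma d_eps_approx x y eta : 0 < eta ->
  exists g a b, rectifiable d g a b /\ g a = x /\ g b = y /\ L g a b < e x y + eta.
Proof.
  intros Heta. apply NNPP. intros Hnot.
  enough (e x y + eta <= e x y) by lra.
  apply d_eps_ge. intros g a b Hr Ha Hb. apply Rnot_lt_le. intros Hlt.
  apply Hnot. exists g, a, b. auto.
Qed.

Lemma d_eps_triangle x y z : e x z <= e x y + e y z.
Proof.
  apply Rnot_lt_le. intros Hlt. set (eta := (e x z - (e x y + e y z)) / 2).
  destruct (d_eps_approx x y eta ltac:(unfold eta; lra)) as (g1 & a1 & b1 & R1 & E1 & F1 & L1).
  destruct (d_eps_approx y z eta ltac:(unfold eta; lra)) as (g2 & a2 & b2 & R2 & E2 & F2 & L2).
  set (c := a2 - b1). set (g2' := fun s => g2 (s + c)).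
  assert (R2' : rectifiable d g2' b1 (b2 - c)).
  { apply rectifiable_shift. unfold c. replace (b1 + (a2 - b1)) with a2 by ring.
    replace (b2 - (a2 - b1) + (a2 - b1)) with b2 by ring. exact R2. }
  assert (L2' : L g2' b1 (b2 - c) = L g2 a2 b2).
  { unfold g2'. rewrite line_integral_shift. unfold c. f_equal; ring. }
  assert (J : g1 b1 = g2' b1) by (unfold g2', c; replace (b1 + (a2 - b1)) with a2 by ring; congruence).
  assert (Z : g2' (b2 - c) = z) by (unfold g2'; replace (b2 - c + c) with b2 by ring; exact F2).
  pose proof (rectifiable_glue d_metric g1 g2' a1 b1 (b2 - c) R1 R2' J) as Rg.
  pose proof (line_integral_glue_le d_metric density density_nonneg density_le_1
                g1 g2' a1 b1 (b2 - c) R1 R2' J) as Lg.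
  pose proof (d_eps_le_line_integral _ _ _ Rg) as K.
  destruct R1 as [Hab1 _], R2' as [Hab2 _].
  rewrite glue_left in K by lra. rewrite glue_right in K by (auto; lra).
  rewrite Z, E1 in K. unfold eta in *. lra.
Qed.

Lemma d_eps_le_geodesic x y s (G : R -> R) : geodesic_segment d x y s ->
  (forall u v, 0 <= u -> u <= v -> v <= d x y -> inf_density s u v * (v - u) <= G v - G u) ->
  e x y <= G (d x y) - G 0.
Proof.
  intros Hs HG. pose proof (d_eps_le_line_integral s 0 (d x y) (geodesic_rectifiable x y s Hs)) as H.
  pose proof (geodesic_isometric x y s Hs) as Hiso.
  destruct Hs as [Hs0 [Hs1 _]]. rewrite Hs0, Hs1 in H.
  eapply Rle_trans; [exact H |].
  apply (line_integral_isometry_le density density_nonneg); auto.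
Qed.

Lemma d_eps_le_density_bound x y s M : geodesic_segment d x y s -> 0 <= M ->
  (forall w, 0 <= w <= d x y -> density (s w) <= M) -> e x y <= M * d x y.
Proof.
  intros Hs HM H. replace (M * d x y) with (M * d x y - M * 0) by ring.
  apply (d_eps_le_geodesic x y s (fun t => M * t) Hs). intros u v Hu Huv Hv.
  pose proof (density_inf_le density density_nonneg s u v v ltac:(lra)).
  pose proof (H v ltac:(lra)). pose proof (density_inf_nonneg density density_nonneg s u v Huv). nra.
Qed.

Lemma d_eps_le_dist x y : e x y <= d x y.
Proof.
  destruct (d_geodesic x y) as [s Hs]. rewrite <- (Rmult_1_l (d x y)).
  apply (d_eps_le_density_bound x y s 1 Hs); [lra |]. intros. apply density_le_1.
Qed.

Lemma d_eps_refl x : e x x = 0.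
Proof.
  pose proof (d_eps_le_dist x x). pose proof (d_eps_nonneg x x).
  rewrite (metric_refl d_metric) in *. lra.
Qed.

Lemma d_eps_outward_le g a b : isometric_on d g a b -> 0 <= a -> a <= b ->
  (forall w, a <= w <= b -> w <= d p (g w)) -> e (g a) (g b) <= exp (- eps * a) / eps.
Proof.
  intros Hiso Ha Hab Hw.
  eapply Rle_trans; [apply d_eps_le_line_integral, rectifiable_isometry; auto |].
  eapply Rle_trans.
  - apply (line_integral_isometry_le density density_nonneg
             g a b (fun t => - exp (- eps * t) / eps)); auto.
    intros u v Hu Huv Hv.
    pose proof (density_inf_le density density_nonneg g u v v ltac:(lra)).
    assert (density (g v) <= exp (- eps * v))
      by (apply exp_le_compat; pose proof (Hw v ltac:(lra)); nra).
    pose proof (density_inf_nonneg density density_nonneg g u v Huv).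
    pose proof (exp_left_endpoint_le eps (- v) (- u) eps_pos ltac:(lra)) as Hexp.
    replace (eps * - v) with (- eps * v) in Hexp by ring.
    replace (eps * - u) with (- eps * u) in Hexp by ring.
    apply Rle_trans with (exp (- eps * v) * (v - u)); [nra |].
    unfold Rdiv in *. lra.
  - pose proof (exp_pos (- eps * b)). pose proof (Rinv_0_lt_compat eps eps_pos).
    unfold Rdiv. nra.
Qed.

Lemma d_eps_inward_le g a b : isometric_on d g a b -> 0 <= a -> a <= b ->
  (forall w, a <= w <= b -> w <= d p (g w)) -> e (g b) (g a) <= exp (- eps * a) / eps.
Proof.
  intros Hiso Ha Hab Hw. set (h := fun t => g (- t)).
  assert (Hiso_h : isometric_on d h (- b) (- a)).
  { intros s t Hs Ht. unfold h. rewrite Hiso by lra. rewrite <- Rabs_Ropp. f_equal. ring. }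
  pose proof (d_eps_le_line_integral h (- b) (- a) (rectifiable_isometry h _ _ Hiso_h ltac:(lra))) as K.
  unfold h in K. rewrite !Ropp_involutive in K.
  eapply Rle_trans; [exact K |]. eapply Rle_trans.
  - apply (line_integral_isometry_le density density_nonneg
             h (- b) (- a) (fun t => exp (eps * t) / eps)); [exact Hiso_h | lra |].
    intros u v Hu Huv Hv.
    pose proof (density_inf_le density density_nonneg h u v u ltac:(lra)).
    assert (density (h u) <= exp (eps * u))
      by (apply exp_le_compat; pose proof (Hw (- u) ltac:(lra)); unfold h; nra).
    pose proof (density_inf_nonneg density density_nonneg h u v Huv).
    pose proof (exp_left_endpoint_le eps u v eps_pos Huv).
    apply Rle_trans with (exp (eps * u) * (v - u)); [nra |].
    unfold Rdiv in *. lra.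
  - pose proof (exp_pos (eps * - b)). pose proof (Rinv_0_lt_compat eps eps_pos).
    replace (eps * - a) with (- eps * a) by ring. unfold Rdiv. nra.
Qed.

Lemma continuous_on_dist_from g a b : continuous_on d g a b ->
  continuous_on (fun x y => Rabs (x - y)) (fun t => d p (g t)) a b.
Proof.
  intros Hc t Ht r Hr. destruct (Hc t Ht r Hr) as [eta [Heta K]].
  exists eta. split; [exact Heta |]. intros s Hs Hst. specialize (K s Hs Hst).
  apply Rabs_def1.
  - pose proof (d_triangle p (g t) (g s)). rewrite (metric_sym d_metric (g t) (g s)) in *. lra.
  - pose proof (d_triangle p (g s) (g t)). lra.
Qed.

(** After the last time [ts] at which the curve is at distance [r + 1] from [p], it stays in
    the ball of radius [r + 1], where the density is at least [exp (- eps * (r + 1))], and it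
    still has length at least [1]. *)
Lemma line_integral_shell_crossing g a b r : rectifiable d g a b ->
  r + 1 <= d p (g a) -> d p (g b) <= r -> exp (- eps * (r + 1)) <= L g a b.
Proof.
  intros Hr Ha Hb. pose proof Hr as [Hab [Hc Hfin]].
  destruct (last_time_above (fun t => d p (g t)) a b (r + 1) Hab (continuous_on_dist_from g a b Hc)
              Ha ltac:(simpl; lra)) as (ts & Hts & Hfts & Hafter).
  simpl in Hfts, Hafter.
  pose proof (line_integral_ge_psum d_metric density density_nonneg density_le_1 g a b Hfin
                2 _ (partition_pair a ts b ltac:(lra) ltac:(lra))) as K.
  simpl in K.
  pose proof (darboux_term_nonneg d_metric density density_nonneg g a b Hfin a ts
                ltac:(lra) ltac:(lra) ltac:(lra)).
  assert (Hgap : 1 <= arc_length d g ts b).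
  { pose proof (dist_le_arc_length d d_nonneg g a b Hfin ts b ltac:(lra) ltac:(lra) ltac:(lra)).
    pose proof (d_triangle p (g b) (g ts)). rewrite (metric_sym d_metric (g b) (g ts)) in *. lra. }
  assert (Hdens : exp (- eps * (r + 1)) <= inf_density g ts b).
  { apply density_inf_ge; [lra |]. intros w Hw. apply exp_le_compat.
    pose proof (Hafter w Hw). nra. }
  assert (exp (- eps * (r + 1)) <= darboux_term d density g ts b).
  { unfold darboux_term. pose proof (exp_pos (- eps * (r + 1))). nra. }
  lra.
Qed.

Lemma d_eps_shell_lower x y r : r + 1 <= d p x -> d p y <= r -> exp (- eps * (r + 1)) <= e x y.
Proof.
  intros Hx Hy. apply d_eps_ge. intros g a b Hr Ha Hb.
  apply line_integral_shell_crossing; [exact Hr | rewrite Ha | rewrite Hb]; assumption.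
Qed.

End UniformizedDistance.

Arguments density {X} d p eps z.

Lemma exp_decay_eventually_lt eps K r : 0 < eps -> 0 < r ->
  exists N : nat, forall n, (N <= n)%nat -> K * exp (- eps * INR n) < r.
Proof.
  intros Heps Hr. destruct (INR_unbounded (Rabs K / (r * eps))) as [N HN].
  exists N. intros n Hn. apply le_INR in Hn.
  set (E := exp (eps * INR n)).
  assert (HE : eps * INR n < E) by (pose proof (exp_ineq1_le (eps * INR n)); unfold E; lra).
  assert (Hinv : exp (- eps * INR n) = / E) by (unfold E; rewrite <- exp_Ropp; f_equal; ring).
  assert (Hreps : 0 < r * eps) by (apply Rmult_lt_0_compat; assumption).
  assert (HK : Rabs K < r * eps * INR n).
  { replace (Rabs K) with (Rabs K / (r * eps) * (r * eps)) by (field; lra).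
    rewrite (Rmult_comm (r * eps)). apply Rmult_lt_compat_r; lra. }
  assert (HE0 : 0 < E) by apply exp_pos.
  rewrite Hinv. apply Rle_lt_trans with (Rabs K * / E).
  - apply Rmult_le_compat_r; [left; apply Rinv_0_lt_compat, HE0 | apply Rle_abs].
  - apply Rmult_lt_reg_r with E; [exact HE0 |].
    rewrite Rmult_assoc, Rinv_l, Rmult_1_r by lra. nra.
Qed.

Section Interleaving.
Context {X : Type} (e : X -> X -> R).
Hypothesis e_refl : forall x, e x x = 0.

Definition interleave (xs ys : nat -> X) (j : nat) : X :=
  if Nat.even j then ys (Nat.div2 j) else xs (Nat.div2 j).

Lemma interleave_even xs ys k : interleave xs ys (2 * k) = ys k.
Proof. unfold interleave. rewrite Nat.div2_double, Nat.even_mul. reflexivity. Qed.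

Lemma interleave_odd xs ys k : interleave xs ys (S (2 * k)) = xs k.
Proof.
  unfold interleave. rewrite Nat.div2_succ_double, Nat.even_succ, Nat.odd_mul. reflexivity.
Qed.

Lemma boundary_seq_div2 ys : boundary_seq e ys -> boundary_seq e (fun j => ys (Nat.div2 j)).
Proof.
  intros [Hcauchy Hnolim]. split.
  - intros r Hr. destruct (Hcauchy r Hr) as [N HN]. exists (2 * N)%nat.
    intros n m Hn Hm. apply HN; apply Nat.div2_le_lower_bound; lia.
  - intros [x Hx]. apply Hnolim. exists x. intros r Hr. destruct (Hx r Hr) as [N HN].
    exists N. intros n Hn. specialize (HN (2 * n)%nat ltac:(lia)).
    rewrite Nat.div2_double in HN. exact HN.
Qed.

Lemma seq_equiv_interleave xs ys : seq_equiv e xs ys ->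
  seq_equiv e (interleave xs ys) (fun j => ys (Nat.div2 j)).
Proof.
  intros Heq r Hr. destruct (Heq r Hr) as [N HN]. exists (2 * N)%nat. intros j Hj.
  destruct (Nat.Even_or_Odd j) as [[k ->] | [k ->]].
  - rewrite interleave_even, Nat.div2_double, e_refl. exact Hr.
  - rewrite Nat.add_1_r, interleave_odd, Nat.div2_succ_double. apply HN. lia.
Qed.

End Interleaving.

(** * Geodesic rays *)

Section Rays.
Context {X : Type} {d : X -> X -> R} {delta : R}.
Hypothesis d_hyperbolic : gromov_hyperbolic d delta.
Variables (p : X) (eps : R).
Hypothesis eps_pos : 0 < eps.

Let d_metric : is_metric d := proj1 d_hyperbolic.
Let d_geodesic : geodesic_space d := proj1 (proj2 (proj2 (proj2 d_hyperbolic))).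
Let d_nonneg := metric_nonneg d_metric.
Let d_sym := metric_sym d_metric.
Let d_triangle := metric_triangle d_metric.

Lemma gromov_inequality x y z q :
  gromov_prod d q x z >= Rmin (gromov_prod d q x y) (gromov_prod d q y z) - delta.
Proof. apply d_hyperbolic. Qed.

Lemma delta_nonneg : 0 <= delta.
Proof.
  pose proof (gromov_inequality p p p p) as H. unfold gromov_prod in H.
  rewrite Rmin_left in H by lra. lra.
Qed.

Notation e := (d_eps d p eps).

Lemma ray_isometric g a b : geodesic_ray d p g -> 0 <= a -> isometric_on d g a b.
Proof. intros [_ H] Ha s t Hs Ht. apply H; lra. Qed.

Lemma ray_dist g w : geodesic_ray d p g -> 0 <= w -> d p (g w) = w.
Proof.
  intros [H0 H] Hw. rewrite <- H0 at 1. rewrite H, Rabs_left1 by lra. ring.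
Qed.

Lemma ray_d_eps_le g (a b : nat) : geodesic_ray d p g ->
  e (g (INR a)) (g (INR b)) <= exp (- eps * INR (min a b)) / eps.
Proof.
  intros Hg.
  assert (Hout : forall u v : nat, (u <= v)%nat ->
            forall w, INR u <= w <= INR v -> w <= d p (g w))
    by (intros u v _ w Hw; pose proof (pos_INR u); rewrite ray_dist by (auto; lra); lra).
  destruct (Nat.le_ge_cases a b) as [Hab | Hba].
  - rewrite Nat.min_l by exact Hab.
    apply (d_eps_outward_le d_metric p eps eps_pos); [apply ray_isometric; auto; apply pos_INR |
      apply pos_INR | apply le_INR, Hab | apply (Hout a b Hab)]; auto.
  - rewrite Nat.min_r by exact Hba.
    apply (d_eps_inward_le d_metric p eps eps_pos); [apply ray_isometric; auto; apply pos_INR |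
      apply pos_INR | apply le_INR, Hba | apply (Hout b a Hba)]; auto.
Qed.

Lemma ray_seq_cauchy g : geodesic_ray d p g -> seq_cauchy e (ray_seq g).
Proof.
  intros Hg r Hr. destruct (exp_decay_eventually_lt eps (/ eps) r eps_pos Hr) as [N HN].
  exists N. intros a b Ha Hb. eapply Rle_lt_trans; [apply ray_d_eps_le, Hg |].
  specialize (HN (min a b) ltac:(lia)). unfold Rdiv. lra.
Qed.

Lemma ray_d_eps_far g x : geodesic_ray d p g ->
  exists r, 0 < r /\ exists K, forall a : nat, (K <= a)%nat -> r <= e (g (INR a)) x.
Proof.
  intros Hg. exists (exp (- eps * (d p x + 1))). split; [apply exp_pos |].
  destruct (INR_unbounded (d p x + 1)) as [K HK]. exists K. intros a Ha.
  apply (d_eps_shell_lower d_metric p eps eps_pos d_geodesic); [| lra].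
  rewrite ray_dist by (auto; apply pos_INR). apply le_INR in Ha. lra.
Qed.

Lemma ray_seq_boundary g : geodesic_ray d p g -> boundary_seq e (ray_seq g).
Proof.
  intros Hg. split; [apply ray_seq_cauchy, Hg |].
  intros [x Hx]. destruct (ray_d_eps_far g x Hg) as [r [Hr [K HK]]].
  destruct (Hx r Hr) as [N HN]. specialize (HN (max N K) ltac:(lia)).
  specialize (HK (max N K) ltac:(lia)). unfold ray_seq in HN. lra.
Qed.

Lemma ray_equiv_seq_equiv g g' : geodesic_ray d p g -> geodesic_ray d p g' ->
  ray_equiv d g g' -> seq_equiv e (ray_seq g) (ray_seq g').
Proof.
  intros Hg Hg' [C HC] r Hr.
  assert (HC0 : 0 <= C) by (pose proof (HC 0 ltac:(lra)); pose proof (d_nonneg (g 0) (g' 0)); lra).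
  destruct (exp_decay_eventually_lt eps (exp (eps * C) * C) r eps_pos Hr) as [N HN].
  exists N. intros n Hn. unfold ray_seq.
  destruct (d_geodesic (g (INR n)) (g' (INR n))) as [s Hs].
  pose proof (HC (INR n) (pos_INR n)) as HD.
  set (M := exp (eps * C) * exp (- eps * INR n)).
  assert (HM : 0 < M) by (apply Rmult_lt_0_compat; apply exp_pos).
  assert (Hdens : forall w, 0 <= w <= d (g (INR n)) (g' (INR n)) -> density d p eps (s w) <= M).
  { intros w Hw. unfold density, M. rewrite <- exp_plus. apply exp_le_compat.
    pose proof (geodesic_isometric _ _ s Hs) as Hiso. destruct Hs as [Hs0 _].
    pose proof (d_triangle p (s w) (s 0)) as T.
    rewrite Hiso, Hs0, ray_dist, Rabs_right in T by (auto; try apply pos_INR; lra).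
    assert (INR n - C <= d p (s w)) by lra. nra. }
  eapply Rle_lt_trans;
    [apply (d_eps_le_density_bound d_metric p eps eps_pos _ _ s M Hs); [lra | exact Hdens] |].
  specialize (HN n Hn). pose proof (exp_pos (eps * C)).
  apply Rle_lt_trans with (M * C); [apply Rmult_le_compat_l; lra |]. unfold M. lra.
Qed.

Lemma geodesic_passes_near_basepoint x y s : geodesic_segment d x y s ->
  exists u, 0 <= u <= d x y /\ d p (s u) <= gromov_prod d p x y + 2 * delta.
Proof.
  intros Hs. pose proof (geodesic_isometric _ _ s Hs) as Hiso. destruct Hs as [Hs0 [Hs1 _]].
  set (u := (d x p + d x y - d p y) / 2).
  assert (Hu : 0 <= u <= d x y).
  { pose proof (d_triangle p x y). pose proof (d_triangle x y p).
    rewrite (d_sym p x) in *. rewrite (d_sym y p) in *. unfold u. lra. }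
  exists u. split; [exact Hu |].
  assert (E1 : d x (s u) = u) by (rewrite <- Hs0 at 1; rewrite Hiso, Rabs_left1 by lra; ring).
  assert (E2 : d y (s u) = d x y - u) by (rewrite <- Hs1 at 1; rewrite Hiso, Rabs_right by lra; ring).
  pose proof (gromov_inequality p y (s u) x) as G. unfold gromov_prod in *.
  rewrite E1, E2 in G.
  replace ((d x y + u - (d x y - u)) / 2) with u in G by lra.
  replace ((d x p + d x y - d p y) / 2) with u in G by (unfold u; lra).
  rewrite Rmin_left in G by lra. rewrite (d_sym p x). unfold u in *. lra.
Qed.

Lemma rays_close_of_gromov_product g g' t T : geodesic_ray d p g -> geodesic_ray d p g' ->
  0 <= t <= T -> t <= gromov_prod d p (g T) (g' T) -> d (g t) (g' t) <= 4 * delta.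
Proof.
  intros Hg Hg' Ht Hprod. set (x := g T) in *. set (y := g' T) in *.
  assert (Gt1 : gromov_prod d p (g t) x = t).
  { unfold gromov_prod, x. rewrite !ray_dist by (auto; lra).
    destruct Hg as [_ Hiso]. rewrite Hiso, Rabs_left1 by lra. lra. }
  assert (Gt2 : gromov_prod d p y (g' t) = t).
  { unfold gromov_prod, y. rewrite !ray_dist by (auto; lra).
    destruct Hg' as [_ Hiso]. rewrite Hiso, Rabs_right by lra. lra. }
  pose proof (gromov_inequality x y (g' t) p) as G1. rewrite Gt2 in G1.
  pose proof (gromov_inequality (g t) x (g' t) p) as G2. rewrite Gt1 in G2.
  pose proof (Rmin_glb _ _ t Hprod (Rle_refl t)).
  assert (Hmid : t - delta <= gromov_prod d p x (g' t)) by lra.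
  pose proof (Rmin_glb t _ (t - delta) ltac:(pose proof delta_nonneg; lra) Hmid).
  assert (Hfinal : t - 2 * delta <= gromov_prod d p (g t) (g' t)) by lra.
  unfold gromov_prod in Hfinal. rewrite !ray_dist in Hfinal by (auto; lra). lra.
Qed.

(** The Gehring-Hayman property is applied to the interleaving of the two ray sequences,
    which is equivalent to the boundary sequence [g' 0, g' 0, g' 1, g' 1, ...]. *)
Lemma GH_constant_along_rays g g' : GH_property d p eps ->
  geodesic_ray d p g -> geodesic_ray d p g' -> seq_equiv e (ray_seq g) (ray_seq g') ->
  exists C, 1 <= C /\ forall k s, geodesic_segment d (g (INR k)) (g' (INR k)) s ->
    Rbar_le (curve_length e s 0 (d (g (INR k)) (g' (INR k)))) (C * e (g (INR k)) (g' (INR k))).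
Proof.
  intros HGH Hg Hg' Heq.
  destruct (HGH _ (boundary_seq_div2 e _ (ray_seq_boundary g' Hg')) _
              (seq_equiv_interleave e (d_eps_refl d_metric p eps eps_pos d_geodesic) _ _ Heq))
    as [C [HC1 HC]].
  exists C. split; [exact HC1 |]. intros k s Hs.
  specialize (HC (S (2 * k)) (2 * k)%nat s). rewrite interleave_odd, interleave_even in HC.
  exact (HC Hs).
Qed.

(** If [(x | y)_p < t] for [x = g k], [y = g' k], the geodesic [x y] enters the ball of
    radius [t + 2 delta] around [p], so its [e]-length is at least [exp (- eps (t + 2 delta + 1))];
    but this length is at most [C e x y], which tends to [0]. *)
Lemma ray_gromov_products_unbounded g g' C : geodesic_ray d p g -> geodesic_ray d p g' ->
  0 < C -> seq_equiv e (ray_seq g) (ray_seq g') ->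
  (forall k s, geodesic_segment d (g (INR k)) (g' (INR k)) s ->
    Rbar_le (curve_length e s 0 (d (g (INR k)) (g' (INR k)))) (C * e (g (INR k)) (g' (INR k)))) ->
  forall t, exists T, t <= T /\ t <= gromov_prod d p (g T) (g' T).
Proof.
  intros Hg Hg' HC0 Heq HC t. set (r := t + 2 * delta).
  destruct (Heq (exp (- eps * (r + 1)) / C)) as [N HN];
    [apply Rdiv_lt_0_compat; [apply exp_pos | exact HC0] |].
  destruct (INR_unbounded (r + 1)) as [k0 Hk0].
  set (k := max N k0).
  assert (Hk : r + 1 <= INR k) by (pose proof (le_INR k0 k ltac:(unfold k; lia)); lra).
  specialize (HN k ltac:(unfold k; lia)). unfold ray_seq in HN.
  exists (INR k). split; [pose proof delta_nonneg; unfold r in Hk; lra |].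
  apply Rnot_lt_le. intros Hlt.
  destruct (d_geodesic (g (INR k)) (g' (INR k))) as [s Hs].
  destruct (geodesic_passes_near_basepoint _ _ s Hs) as [u [Hu Hsu]].
  assert (Hlow : exp (- eps * (r + 1)) <= e (g (INR k)) (s u)).
  { apply (d_eps_shell_lower d_metric p eps eps_pos d_geodesic); [| unfold r; lra].
    rewrite ray_dist by (auto; apply pos_INR). lra. }
  assert (Hup : Rbar_le (e (g (INR k)) (s u)) (C * e (g (INR k)) (g' (INR k)))).
  { pose proof (curve_length_ge_dist e s 0 u (proj1 Hu)) as H1.
    pose proof (curve_length_subinterval e (d_eps_nonneg d_metric p eps eps_pos d_geodesic)
                  s 0 0 u _ ltac:(lra) (proj1 Hu) (proj2 Hu)) as H2.
    pose proof Hs as [Hs0 _]. rewrite Hs0 in H1.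
    exact (Rbar_le_trans _ _ _ H1 (Rbar_le_trans _ _ _ H2 (HC k s Hs))). }
  simpl in Hup.
  assert (C * e (g (INR k)) (g' (INR k)) < exp (- eps * (r + 1))).
  { apply Rmult_lt_compat_l with (r := C) in HN; [| exact HC0].
    unfold Rdiv in HN. rewrite (Rmult_comm (exp _)), <- Rmult_assoc, Rinv_r, Rmult_1_l in HN by lra.
    exact HN. }
  lra.
Qed.

Lemma ray_seq_equiv_ray_equiv g g' : GH_property d p eps ->
  geodesic_ray d p g -> geodesic_ray d p g' ->
  seq_equiv e (ray_seq g) (ray_seq g') -> ray_equiv d g g'.
Proof.
  intros HGH Hg Hg' Heq.
  destruct (GH_constant_along_rays g g' HGH Hg Hg' Heq) as [C [HC1 HC]].
  exists (4 * delta). intros t Ht.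
  destruct (ray_gromov_products_unbounded g g' C Hg Hg' ltac:(lra) Heq HC t) as [T [HtT Hprod]].
  exact (rays_close_of_gromov_product g g' t T Hg Hg' (conj Ht HtT) Hprod).
Qed.

End Rays.

(** * Sequential compactness in proper spaces *)

Definition strictly_increasing (phi : nat -> nat) : Prop := forall j, (phi j < phi (S j))%nat.

Lemma strictly_increasing_ge phi : strictly_increasing phi -> forall j, (j <= phi j)%nat.
Proof. intros H j. induction j as [|j IH]; [lia | specialize (H j); lia]. Qed.

Lemma strictly_increasing_lt phi : strictly_increasing phi ->
  forall i j, (i < j)%nat -> (phi i < phi j)%nat.
Proof.
  intros H i j Hij. induction Hij as [| j Hij IH]; [apply H |]. specialize (H j). lia.
Qed.

Lemma list_nat_bound {A : Type} (f : A -> nat) (l : list A) :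
  exists M, forall c, In c l -> (f c <= M)%nat.
Proof.
  induction l as [|a l [M HM]]; [exists 0%nat; intros c [] |].
  exists (max (f a) M). intros c [<- | Hc]; [lia | specialize (HM c Hc); lia].
Qed.

Lemma inv_succ_eventually_lt eta : 0 < eta ->
  exists J : nat, forall j, (J <= j)%nat -> / (INR j + 1) < eta.
Proof.
  intros Heta. destruct (INR_unbounded (/ eta)) as [J HJ]. exists J. intros j Hj.
  apply le_INR in Hj. pose proof (pos_INR J).
  rewrite <- (Rinv_inv eta). apply Rinv_lt_contravar; [| lra].
  pose proof (Rinv_0_lt_compat eta Heta). nra.
Qed.

Section ProperSpace.
Context {X : Type} {d : X -> X -> R} (d_metric : is_metric d).
Hypothesis d_proper : proper_space d.
Variable p : X.

Let d_triangle := metric_triangle d_metric.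

Definition converges_along (y : nat -> X) (phi : nat -> nat) : Prop :=
  strictly_increasing phi /\
  exists c, forall eta, 0 < eta -> exists J, forall j, (J <= j)%nat -> d (y (phi j)) c < eta.

(** Otherwise every point has a ball that [y] eventually avoids, and a finite
    subcover of the closed ball of radius [Rb] would be eventually avoided. *)
Lemma bounded_seq_cluster_point (y : nat -> X) Rb :
  (forall N, exists n, (N <= n)%nat /\ d p (y n) <= Rb) ->
  exists c, forall eta, 0 < eta -> forall N, exists n, (N <= n)%nat /\ d c (y n) < eta.
Proof.
  intros Hfreq. apply NNPP. intros Hnone.
  assert (Havoid : forall c, exists rN : R * nat,
             0 < fst rN /\ forall n, (snd rN <= n)%nat -> fst rN <= d c (y n)).
  { intros c. apply NNPP. intros Hc. apply Hnone. exists c. intros eta Heta N.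
    apply NNPP. intros Hfar. apply Hc. exists (eta, N). split; [exact Heta |].
    intros n Hn. apply Rnot_lt_le. intros Hl. apply Hfar. exists n. auto. }
  destruct (choice _ Havoid) as [F HF].
  destruct (d_proper p Rb X (fun c z => d c z < fst (F c))) as [l Hl].
  - intros c z Hz. exists (fst (F c) - d c z). split; [lra |].
    intros w Hw. pose proof (d_triangle c z w). lra.
  - intros c _. exists c. rewrite (metric_refl d_metric). apply HF.
  - destruct (list_nat_bound (fun c => snd (F c)) l) as [M HM].
    destruct (Hfreq M) as [n [Hn Hyn]]. destruct (Hl (y n) Hyn) as [c [Hcl Hcy]].
    destruct (HF c) as [_ Hfar]. specialize (HM c Hcl).
    specialize (Hfar n ltac:(simpl in HM; lia)). lra.
Qed.

Lemma bounded_cauchy_seq_converges (y : nat -> X) Rb : (forall n, d p (y n) <= Rb) ->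
  (forall eta, 0 < eta -> exists N, forall n m, (N <= n)%nat -> (N <= m)%nat -> d (y n) (y m) < eta) ->
  exists c, forall eta, 0 < eta -> exists N, forall n, (N <= n)%nat -> d (y n) c < eta.
Proof.
  intros Hbound Hcauchy. destruct (bounded_seq_cluster_point y Rb) as [c Hc].
  { intros N. exists N. split; [lia | apply Hbound]. }
  exists c. intros eta Heta. destruct (Hcauchy (eta / 2) ltac:(lra)) as [N HN].
  exists N. intros n Hn. destruct (Hc (eta / 2) ltac:(lra) N) as [m [Hm Hcm]].
  specialize (HN n m Hn Hm). pose proof (d_triangle (y n) (y m) c).
  rewrite (metric_sym d_metric (y m) c) in *. lra.
Qed.

Lemma bounded_seq_converges_along (y : nat -> X) Rb :
  (forall n, d p (y n) <= Rb) -> exists phi, converges_along y phi.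
Proof.
  intros Hbound. destruct (bounded_seq_cluster_point y Rb) as [c Hc].
  { intros N. exists N. split; [lia | apply Hbound]. }
  assert (Hnext : forall k N, {n | (N <= n)%nat /\ d c (y n) < / (INR k + 1)}).
  { intros k N. apply constructive_indefinite_description. apply Hc.
    pose proof (pos_INR k). apply Rinv_0_lt_compat. lra. }
  set (next := fun k N => proj1_sig (Hnext k N)).
  assert (Hnext_spec : forall k N, (N <= next k N)%nat /\ d c (y (next k N)) < / (INR k + 1))
    by (intros k N; unfold next; destruct (Hnext k N); auto).
  set (phi := fix phi j := match j with O => next O O | S j' => next (S j') (S (phi j')) end).
  exists phi. split.
  - intros j. simpl. pose proof (Hnext_spec (S j) (S (phi j))). lia.
  - exists c. intros eta Heta. destruct (inv_succ_eventually_lt eta Heta) as [J HJ].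
    exists J. intros j Hj. rewrite (metric_sym d_metric). specialize (HJ j Hj).
    assert (d c (y (phi j)) < / (INR j + 1)) by (destruct j; apply Hnext_spec).
    lra.
Qed.

Definition extraction (y : nat -> X) : nat -> nat :=
  epsilon (inhabits (fun n : nat => n)) (converges_along y).

Lemma extraction_spec y Rb : (forall n, d p (y n) <= Rb) -> converges_along y (extraction y).
Proof.
  intros Hbound. unfold extraction. apply epsilon_spec.
  apply (bounded_seq_converges_along y Rb Hbound).
Qed.

Section Diagonal.
Variable F : nat -> nat -> X.
Variable B : nat -> R.
Hypothesis F_bounded : forall k n, d p (F k n) <= B k.

Fixpoint nested_extraction (k : nat) : nat -> nat :=
  match k with
  | O => extraction (F O)
  | S k' => fun j => nested_extraction k' (extraction (fun i => F (S k') (nested_extraction k' i)) j)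
  end.

Lemma nested_extraction_spec k : converges_along (F k) (nested_extraction k).
Proof.
  induction k as [|k [Hinc _]].
  - apply (extraction_spec (F 0%nat) (B 0%nat)). intros; apply F_bounded.
  - destruct (extraction_spec (fun i => F (S k) (nested_extraction k i)) (B (S k))
                (fun n => F_bounded (S k) _)) as [Hinc' [c Hc]].
    split.
    + intros j. simpl. apply (strictly_increasing_lt _ Hinc), Hinc'.
    + exists c. intros eta Heta. destruct (Hc eta Heta) as [J HJ]. exists J. exact HJ.
Qed.

Lemma nested_extraction_refines k m : (k <= m)%nat ->
  forall j, exists i, (j <= i)%nat /\ nested_extraction m j = nested_extraction k i.
Proof.
  intros Hkm. induction Hkm as [| m Hkm IH]; intros j; [exists j; split; auto |].
  set (phi := extraction (fun i => F (S m) (nested_extraction m i))).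
  destruct (extraction_spec (fun i => F (S m) (nested_extraction m i)) (B (S m))
              (fun n => F_bounded (S m) _)) as [Hinc _].
  destruct (IH (phi j)) as [i [Hi E]]. exists i. split; [| exact E].
  pose proof (strictly_increasing_ge phi Hinc j). lia.
Qed.

Definition diagonal_extraction (j : nat) : nat := nested_extraction j j.

Lemma diagonal_extraction_increasing : strictly_increasing diagonal_extraction.
Proof.
  intros j. unfold diagonal_extraction. simpl.
  set (phi := extraction (fun i => F (S j) (nested_extraction j i))).
  destruct (extraction_spec (fun i => F (S j) (nested_extraction j i)) (B (S j))
              (fun n => F_bounded (S j) _)) as [Hinc _].
  destruct (nested_extraction_spec j) as [Hinc' _]. apply strictly_increasing_lt; auto.
  pose proof (strictly_increasing_ge phi Hinc (S j)). fold phi. lia.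
Qed.

Lemma diagonal_extraction_converges k :
  exists c, forall eta, 0 < eta -> exists J, forall j, (J <= j)%nat -> d (F k (diagonal_extraction j)) c < eta.
Proof.
  destruct (nested_extraction_spec k) as [_ [c Hc]]. exists c. intros eta Heta.
  destruct (Hc eta Heta) as [J HJ]. exists (max J k). intros j Hj. unfold diagonal_extraction.
  destruct (nested_extraction_refines k j ltac:(lia) j) as [i [Hi ->]]. apply HJ. lia.
Qed.

End Diagonal.
End ProperSpace.

Arguments diagonal_extraction {X} d F j.

(** * Surjectivity *)

Definition nonneg_rational (k : nat) : R :=
  INR (fst (Cantor.of_nat k)) / INR (S (snd (Cantor.of_nat k))).

Lemma nonneg_rational_nonneg k : 0 <= nonneg_rational k.
Proof.
  unfold nonneg_rational. apply Rmult_le_pos; [apply pos_INR |].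
  left. apply Rinv_0_lt_compat, lt_0_INR. lia.
Qed.

Lemma nonneg_rational_dense t eta : 0 <= t -> 0 < eta ->
  exists k, Rabs (nonneg_rational k - t) < eta.
Proof.
  intros Ht Heta. destruct (inv_succ_eventually_lt eta Heta) as [m Hm].
  specialize (Hm m (Nat.le_refl m)).
  set (M := INR m + 1) in Hm. assert (HM : 0 < M) by (pose proof (pos_INR m); unfold M; lra).
  destruct (nfloor_ex (t * M) ltac:(nra)) as [i Hi].
  exists (Cantor.to_nat (i, m)). unfold nonneg_rational. rewrite Cantor.cancel_of_to.
  simpl fst. simpl snd. rewrite S_INR. fold M.
  replace (INR i / M - t) with ((INR i - t * M) * / M) by (field; lra).
  pose proof (Rinv_0_lt_compat M HM). apply Rabs_def1; nra.
Qed.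

Section Surjectivity.
Context {X : Type} {d : X -> X -> R} {delta : R}.
Hypothesis d_hyperbolic : gromov_hyperbolic d delta.
Variables (p : X) (eps : R).
Hypothesis eps_pos : 0 < eps.

Let d_metric : is_metric d := proj1 d_hyperbolic.
Let d_proper : proper_space d := proj1 (proj2 (proj2 d_hyperbolic)).
Let d_geodesic : geodesic_space d := proj1 (proj2 (proj2 (proj2 d_hyperbolic))).
Let d_nonneg := metric_nonneg d_metric.
Let d_sym := metric_sym d_metric.
Let d_triangle := metric_triangle d_metric.

Notation e := (d_eps d p eps).
Let e_triangle := d_eps_triangle d_metric p eps eps_pos d_geodesic.
Let e_le_d := d_eps_le_dist d_metric p eps eps_pos d_geodesic.

Variable xs : nat -> X.
Hypothesis xs_boundary : boundary_seq e xs.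

Lemma boundary_seq_escapes Rb : exists N, forall n, (N <= n)%nat -> Rb < d p (xs n).
Proof.
  apply NNPP. intros Hnot.
  assert (Hfreq : forall N, exists n, (N <= n)%nat /\ d p (xs n) <= Rb).
  { intros N. apply NNPP. intros Hno. apply Hnot. exists N. intros n Hn.
    apply Rnot_le_lt. intros Hle. apply Hno. exists n. auto. }
  destruct (bounded_seq_cluster_point d_metric d_proper p xs Rb Hfreq) as [c Hc].
  destruct xs_boundary as [Hcauchy Hnolim]. apply Hnolim. exists c. intros eta Heta.
  destruct (Hcauchy (eta / 2) ltac:(lra)) as [N HN]. exists N. intros m Hm.
  destruct (Hc (eta / 2) ltac:(lra) N) as [n [Hn Hcn]].
  pose proof (e_triangle (xs m) (xs n) c). pose proof (e_le_d (xs n) c).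
  rewrite (d_sym c (xs n)) in Hcn. specialize (HN m n Hm Hn). lra.
Qed.

Definition radius (n : nat) : R := d p (xs n).

Definition segment (n : nat) : R -> X :=
  proj1_sig (constructive_indefinite_description _ (d_geodesic p (xs n))).

Lemma segment_geodesic n : geodesic_segment d p (xs n) (segment n).
Proof. unfold segment. destruct constructive_indefinite_description. exact g. Qed.

Lemma segment_isometric n s t : 0 <= s <= radius n -> 0 <= t <= radius n ->
  d (segment n s) (segment n t) = Rabs (s - t).
Proof. apply (geodesic_isometric _ _ _ (segment_geodesic n)). Qed.

Lemma segment_dist n w : 0 <= w <= radius n -> d p (segment n w) = w.
Proof.
  intros Hw. destruct (segment_geodesic n) as [Hs0 _]. rewrite <- Hs0 at 1.
  rewrite segment_isometric, Rabs_left1 by (unfold radius in *; pose proof (d_nonneg p (xs n)); lra).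
  ring.
Qed.

(** [segment n] prolonged by its endpoint, so that all of them are defined on [0, +oo). *)
Definition stopped_segment (n : nat) (t : R) : X := segment n (Rmin t (radius n)).

Lemma Rmin_radius_bounds t n : 0 <= t -> 0 <= Rmin t (radius n) <= radius n.
Proof.
  intros Ht. pose proof (d_nonneg p (xs n)). unfold radius in *.
  split; [apply Rmin_case; lra | apply Rmin_r].
Qed.

Lemma stopped_segment_dist n t : 0 <= t -> d p (stopped_segment n t) <= t.
Proof.
  intros Ht. unfold stopped_segment. rewrite segment_dist by (apply Rmin_radius_bounds, Ht).
  apply Rmin_l.
Qed.

Lemma stopped_segment_lipschitz n s t : 0 <= s -> 0 <= t ->
  d (stopped_segment n s) (stopped_segment n t) <= Rabs (s - t).
Proof.
  intros Hs Ht. unfold stopped_segment. rewrite segment_isometric by (apply Rmin_radius_bounds; auto).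
  pose proof (Rle_abs (s - t)) as A1. pose proof (Rle_abs (t - s)) as A2.
  rewrite Rabs_minus_sym in A2. apply Rabs_le_between. unfold Rmin. destruct (Rle_dec s (radius n)), (Rle_dec t (radius n)); lra.
Qed.

Lemma stopped_segment_eq n t : 0 <= t <= radius n -> stopped_segment n t = segment n t.
Proof. intros Ht. unfold stopped_segment. rewrite Rmin_left by lra. reflexivity. Qed.

Definition subseq : nat -> nat :=
  diagonal_extraction d (fun k n => stopped_segment n (nonneg_rational k)).

Lemma subseq_increasing : strictly_increasing subseq.
Proof.
  apply (diagonal_extraction_increasing d_metric d_proper p _ nonneg_rational).
  intros. apply stopped_segment_dist, nonneg_rational_nonneg.
Qed.

(** Convergence at the rational times, upgraded to all times by the uniform
    Lipschitz bound and completeness of balls. *)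
Lemma stopped_segments_converge t : 0 <= t ->
  exists c, forall eta, 0 < eta -> exists J, forall j, (J <= j)%nat ->
    d (stopped_segment (subseq j) t) c < eta.
Proof.
  intros Ht. apply (bounded_cauchy_seq_converges d_metric d_proper p _ t).
  { intros. apply stopped_segment_dist, Ht. }
  intros eta Heta. destruct (nonneg_rational_dense t (eta / 3) Ht ltac:(lra)) as [k Hk].
  destruct (diagonal_extraction_converges d_metric d_proper p
              (fun k n => stopped_segment n (nonneg_rational k)) nonneg_rational
              (fun k n => stopped_segment_dist n _ (nonneg_rational_nonneg k)) k) as [c Hc].
  destruct (Hc (eta / 6) ltac:(lra)) as [J HJ]. exists J. intros i j Hi Hj.
  pose proof (HJ i Hi) as Ci. pose proof (HJ j Hj) as Cj. fold subseq in Ci, Cj.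
  pose proof (nonneg_rational_nonneg k) as Hq. set (q := nonneg_rational k) in *. clearbody q.
  pose proof (stopped_segment_lipschitz (subseq i) t q Ht Hq) as Hi'.
  pose proof (stopped_segment_lipschitz (subseq j) q t Hq Ht).
  rewrite Rabs_minus_sym in Hi'.
  pose proof (d_triangle (stopped_segment (subseq i) t) (stopped_segment (subseq i) q)
                (stopped_segment (subseq j) t)).
  pose proof (d_triangle (stopped_segment (subseq i) q) c (stopped_segment (subseq j) t)).
  pose proof (d_triangle c (stopped_segment (subseq j) q) (stopped_segment (subseq j) t)).
  rewrite (d_sym c (stopped_segment (subseq j) q)) in *. lra.
Qed.

Definition limit_ray (t : R) : X :=
  epsilon (inhabits p) (fun c => forall eta, 0 < eta -> exists J, forall j, (J <= j)%nat ->
                          d (stopped_segment (subseq j) t) c < eta).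

Lemma limit_ray_spec t : 0 <= t -> forall eta, 0 < eta ->
  exists J, forall j, (J <= j)%nat -> d (stopped_segment (subseq j) t) (limit_ray t) < eta.
Proof. intros Ht. unfold limit_ray. apply epsilon_spec, stopped_segments_converge, Ht. Qed.

Lemma radius_subseq_large T : exists J, forall j, (J <= j)%nat -> T <= radius (subseq j).
Proof.
  destruct (boundary_seq_escapes T) as [N HN]. exists N. intros j Hj.
  pose proof (strictly_increasing_ge subseq subseq_increasing j). left. apply HN. lia.
Qed.

Lemma limit_ray_geodesic : geodesic_ray d p limit_ray.
Proof.
  split.
  - symmetry. apply (metric_eq d_metric). apply Rle_antisym; [| apply d_nonneg].
    apply Rnot_lt_le. intros Hpos.
    destruct (limit_ray_spec 0 ltac:(lra) _ Hpos) as [J HJ]. specialize (HJ J (Nat.le_refl J)).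
    unfold stopped_segment in HJ. rewrite Rmin_left in HJ by apply d_nonneg.
    destruct (segment_geodesic (subseq J)) as [Hs0 _]. rewrite Hs0 in HJ. lra.
  - intros s t Hs Ht. apply cond_eq. intros eta Heta.
    destruct (limit_ray_spec s Hs (eta / 2) ltac:(lra)) as [J1 H1].
    destruct (limit_ray_spec t Ht (eta / 2) ltac:(lra)) as [J2 H2].
    destruct (radius_subseq_large (Rmax s t)) as [J3 H3].
    set (j := max J1 (max J2 J3)).
    specialize (H1 j ltac:(unfold j; lia)). specialize (H2 j ltac:(unfold j; lia)).
    specialize (H3 j ltac:(unfold j; lia)).
    pose proof (Rmax_l s t). pose proof (Rmax_r s t).
    set (n := subseq j) in *.
    assert (Hst : d (stopped_segment n s) (stopped_segment n t) = Rabs (s - t))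
      by (rewrite !stopped_segment_eq by lra; apply segment_isometric; lra).
    pose proof (d_triangle (limit_ray s) (stopped_segment n s) (limit_ray t)).
    pose proof (d_triangle (stopped_segment n s) (stopped_segment n t) (limit_ray t)).
    pose proof (d_triangle (stopped_segment n s) (limit_ray s) (stopped_segment n t)).
    pose proof (d_triangle (limit_ray s) (limit_ray t) (stopped_segment n t)).
    rewrite (d_sym (limit_ray s) (stopped_segment n s)) in *.
    rewrite (d_sym (limit_ray t) (stopped_segment n t)) in *.
    apply Rabs_def1; lra.
Qed.

(** For large [n], [limit_ray k] is close to [segment n k], which is [e]-close to [xs n]
    because beyond time [k] the segment moves away from [p] at unit speed. *)
Lemma limit_ray_seq_equiv : seq_equiv e (ray_seq limit_ray) xs.
Proof.
  intros r Hr. destruct (exp_decay_eventually_lt eps (/ eps) (r / 3) eps_pos ltac:(lra)) as [K0 HK0].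
  destruct xs_boundary as [Hcauchy _]. destruct (Hcauchy (r / 3) ltac:(lra)) as [N1 HN1].
  exists (max K0 N1). intros k Hk. unfold ray_seq. set (t := INR k).
  assert (Ht : 0 <= t) by apply pos_INR.
  destruct (limit_ray_spec t Ht (r / 3) ltac:(lra)) as [J1 HJ1].
  destruct (radius_subseq_large t) as [J2 HJ2].
  set (j := max J1 (max J2 N1)). set (n := subseq j).
  specialize (HJ1 j ltac:(unfold j; lia)). specialize (HJ2 j ltac:(unfold j; lia)).
  fold n in HJ1, HJ2.
  assert (Hn : (N1 <= n)%nat)
    by (pose proof (strictly_increasing_ge subseq subseq_increasing j); unfold n, j in *; lia).
  rewrite stopped_segment_eq in HJ1 by lra.
  assert (Hfar : e (segment n t) (xs n) <= exp (- eps * t) / eps).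
  { destruct (segment_geodesic n) as [_ [Hs1 _]]. rewrite <- Hs1.
    apply (d_eps_outward_le d_metric p eps eps_pos); [| exact Ht | exact HJ2 |].
    - intros a b Ha Hb. apply segment_isometric; unfold radius in *; lra.
    - intros w Hw. rewrite segment_dist by (unfold radius in *; lra). lra. }
  pose proof (e_triangle (limit_ray t) (segment n t) (xs k)).
  pose proof (e_triangle (segment n t) (xs n) (xs k)).
  pose proof (e_le_d (limit_ray t) (segment n t)).
  rewrite (d_sym (segment n t) (limit_ray t)) in HJ1.
  specialize (HK0 k ltac:(lia)). specialize (HN1 n k Hn ltac:(lia)).
  unfold Rdiv in *. fold t in HK0. lra.
Qed.

End Surjectivity.

Theorem lemma3p2 (X : Type) (d : X -> X -> R) (delta : R) (p : X) (eps : R) :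
  gromov_hyperbolic d delta -> 0 < eps ->
  GH_property d p eps ->
  Phi_bijective d p eps.
Proof.
  intros Hhyp Heps HGH. split; [| split; [| split]].
  - intros g Hg. exact (ray_seq_boundary Hhyp p eps Heps g Hg).
  - intros g g' Hg Hg' Hequiv. exact (ray_equiv_seq_equiv Hhyp p eps Heps g g' Hg Hg' Hequiv).
  - intros g g' Hg Hg' Hequiv. exact (ray_seq_equiv_ray_equiv Hhyp p eps Heps g g' HGH Hg Hg' Hequiv).
  - intros xs Hxs. exists (limit_ray Hhyp p xs). split.
    + exact (limit_ray_geodesic Hhyp p eps Heps xs Hxs).
    + exact (limit_ray_seq_equiv Hhyp p eps Heps xs Hxs).
Qed.
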